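(* Let $E$ be a locally complete lcHs, $G\subset E'$ a linear subspace that determines boundedness, $\Omega\subset\mathbb{R}^d$ open, $k\in\mathbb{N}_0$ and $0<\gamma\le1$. (a) If $f\colon\Omega\to E$ is such that $e'\circ f\in\mathcal{C}^{k,\gamma}_{loc}(\Omega)$ for all $e'\in G$, then $f\in\mathcal{C}^{k,\gamma}_{loc}(\Omega,E)$. (b) If $f\colon\Omega\to E$ is such that $e'\circ f\in\mathcal{C}^{k+1}(\Omega)$ for all $e'\in G$, then $f\in\mathcal{C}^{k,1}_{loc}(\Omega,E)$.
   Context: $\mathbb{K}\in\{\mathbb{R},\mathbb{C}\}$; ''lcHs'' means locally convex Hausdorff space over $\mathbb{K}$ with directed fundamental system of seminorms $(p_\alpha)_{\alpha\in\mathfrak{A}}$. $E$ is locally complete if for every closed bounded absolutely convex $D\subset E$ the space $\bigcup_n nD$ normed by the gauge of $D$ is Banach. $G\subset E'$ determines boundedness if every $\sigma(E,G)$-bounded subset of $E$ is bounded in $E$. $\mathcal{C}^k(\Omega,E)$ denotes $k$-times continuously partially differentiable functions (partial derivatives $(\partial^\beta)^E$ as limits of difference quotients in $E$). $\mathcal{C}^{k,\gamma}_{loc}(\Omega,E)$ is the space of $f\in\mathcal{C}^k(\Omega,E)$ such that for every compact $K\subset\Omega$ and $\alpha\in\mathfrak{A}$: $\sup_{x\in K,|\beta|\le k}p_\alpha((\partial^\beta)^Ef(x))<\infty$ and $\sup_{|\beta|=k}\sup_{x\ne y\in K}\frac{p_\alpha((\partial^\beta)^Ef(x)-(\partial^\beta)^Ef(y))}{|x-y|^\gamma}<\infty$.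 For $E=\mathbb{K}$ the $E$ is omitted. *)

From Stdlib Require Import Reals Lra List.
Open Scope R_scope.

Inductive Kind := KReal | KCplx.

Definition Kt (k : Kind) : Type :=
  match k with KReal => R | KCplx => (R * R)%type end.

Definition Kadd {k : Kind} : Kt k -> Kt k -> Kt k :=
  match k with
  | KReal => fun a b => a + b
  | KCplx => fun a b => (fst a + fst b, snd a + snd b)
  end.

Definition Kmul {k : Kind} : Kt k -> Kt k -> Kt k :=
  match k with
  | KReal => fun a b => a * b
  | KCplx => fun a b => (fst a * fst b - snd a * snd b,
                         fst a * snd b + snd a * fst b)
  end.

Definition Kopp {k : Kind} : Kt k -> Kt k :=
  match k with
  | KReal => fun a => - a
  | KCplx => fun a => (- fst a, - snd a)
  end.

Definition Kabs {k : Kind} : Kt k -> R :=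
  match k with
  | KReal => fun a => Rabs a
  | KCplx => fun a => sqrt (fst a * fst a + snd a * snd a)
  end.

Definition Kinj {k : Kind} : R -> Kt k :=
  match k with
  | KReal => fun r => r
  | KCplx => fun r => (r, 0)
  end.

Record LCS (k : Kind) := {
  car :> Type;
  vzero : car;
  vadd : car -> car -> car;
  vopp : car -> car;
  vscal : Kt k -> car -> car;
  idx : Type;
  sn : idx -> car -> R
}.
Arguments vzero {k} _.
Arguments vadd {k} _ _ _.
Arguments vopp {k} _ _.
Arguments vscal {k} _ _ _.
Arguments idx {k} _.
Arguments sn {k} _ _ _.

Definition vsub {k} (E : LCS k) (x y : E) : E := vadd E x (vopp E y).

(* E is a locally convex Hausdorff space over K whose topology is given by the
   directed fundamental system of seminorms (sn E a)_{a : idx E}. *)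
Definition lcHs {k : Kind} (E : LCS k) : Prop :=
  (forall x y z : E, vadd E x (vadd E y z) = vadd E (vadd E x y) z) /\
  (forall x y : E, vadd E x y = vadd E y x) /\
  (forall x : E, vadd E x (vzero E) = x) /\
  (forall x : E, vadd E x (vopp E x) = vzero E) /\
  (forall (c : Kt k) (x y : E), vscal E c (vadd E x y) = vadd E (vscal E c x) (vscal E c y)) /\
  (forall (c d : Kt k) (x : E), vscal E (Kadd c d) x = vadd E (vscal E c x) (vscal E d x)) /\
  (forall (c d : Kt k) (x : E), vscal E (Kmul c d) x = vscal E c (vscal E d x)) /\
  (forall x : E, vscal E (Kinj 1) x = x) /\
  (forall (a : idx E) (c : Kt k) (x : E), sn E a (vscal E c x) = Kabs c * sn E a x) /\
  (forall (a : idx E) (x y : E), sn E a (vadd E x y) <= sn E a x + sn E a y) /\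
  inhabited (idx E) /\
  (forall a b : idx E, exists c : idx E, forall x : E,
      sn E a x <= sn E c x /\ sn E b x <= sn E c x) /\
  (forall x : E, (forall a : idx E, sn E a x = 0) -> x = vzero E).

Definition Kspace (k : Kind) : LCS k := {|
  car := Kt k; vzero := Kinj 0; vadd := Kadd; vopp := Kopp; vscal := Kmul;
  idx := unit; sn := fun _ x => Kabs x |}.

Definition bounded {k} (E : LCS k) (B : E -> Prop) : Prop :=
  forall a : idx E, exists M : R, forall x, B x -> sn E a x <= M.

Definition in_dual {k} (E : LCS k) (e : E -> Kt k) : Prop :=
  (forall x y : E, e (vadd E x y) = Kadd (e x) (e y)) /\
  (forall (c : Kt k) (x : E), e (vscal E c x) = Kmul c (e x)) /\
  (exists (a : idx E) (C : R), forall x : E, Kabs (e x) <= C * sn E a x).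

Definition dual_subspace {k} (E : LCS k) (G : (E -> Kt k) -> Prop) : Prop :=
  (forall e, G e -> in_dual E e) /\
  G (fun _ => Kinj 0) /\
  (forall e1 e2, G e1 -> G e2 -> G (fun x => Kadd (e1 x) (e2 x))) /\
  (forall (c : Kt k) e, G e -> G (fun x => Kmul c (e x))).

Definition weakly_bounded {k} (E : LCS k) (G : (E -> Kt k) -> Prop)
  (B : E -> Prop) : Prop :=
  forall e, G e -> exists M : R, forall x, B x -> Kabs (e x) <= M.

Definition determines_boundedness {k} (E : LCS k) (G : (E -> Kt k) -> Prop) : Prop :=
  forall B : E -> Prop, weakly_bounded E G B -> bounded E B.

Definition closed_set {k} (E : LCS k) (D : E -> Prop) : Prop :=
  forall x : E,
    (forall (a : idx E) (eps : R), 0 < eps -> exists y, D y /\ sn E a (vsub E x y) < eps) ->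
    D x.

Definition abs_convex {k} (E : LCS k) (D : E -> Prop) : Prop :=
  forall (x y : E) (c1 c2 : Kt k), D x -> D y -> Kabs c1 + Kabs c2 <= 1 ->
    D (vadd E (vscal E c1 x) (vscal E c2 y)).

Definition in_mult {k} (E : LCS k) (D : E -> Prop) (t : R) (x : E) : Prop :=
  exists y, D y /\ x = vscal E (Kinj t) y.

Definition in_span {k} (E : LCS k) (D : E -> Prop) (x : E) : Prop :=
  exists n : nat, in_mult E D (INR n) x.

(* gauge_D(x) < eps, i.e. inf{t > 0 | x ∈ t D} < eps *)
Definition gauge_lt {k} (E : LCS k) (D : E -> Prop) (x : E) (eps : R) : Prop :=
  exists t, 0 < t /\ t < eps /\ in_mult E D t x.

(* (E_D, gauge of D) is a Banach space: every Cauchy sequence converges *)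
Definition gauge_Banach {k} (E : LCS k) (D : E -> Prop) : Prop :=
  forall u : nat -> E,
    (forall n, in_span E D (u n)) ->
    (forall eps, 0 < eps -> exists N, forall m n, (N <= m)%nat -> (N <= n)%nat ->
        gauge_lt E D (vsub E (u m) (u n)) eps) ->
    exists x, in_span E D x /\
      forall eps, 0 < eps -> exists N, forall n, (N <= n)%nat ->
        gauge_lt E D (vsub E (u n) x) eps.

Definition locally_complete {k} (E : LCS k) : Prop :=
  forall D : E -> Prop, closed_set E D -> bounded E D -> abs_convex E D ->
    gauge_Banach E D.

(* Points of R^d are functions nat -> R vanishing at coordinates >= d. *)
Definition inRd (d : nat) (x : nat -> R) : Prop :=
  forall i, (d <= i)%nat -> x i = 0.

Fixpoint sumsq (d : nat) (x y : nat -> R) : R :=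
  match d with
  | O => 0
  | S n => sumsq n x y + (x n - y n) * (x n - y n)
  end.

Definition dist (d : nat) (x y : nat -> R) : R := sqrt (sumsq d x y).

Definition open_Rd (d : nat) (U : (nat -> R) -> Prop) : Prop :=
  forall x, inRd d x -> U x ->
    exists r, 0 < r /\ forall y, inRd d y -> dist d x y < r -> U y.

Definition open_domain (d : nat) (Om : (nat -> R) -> Prop) : Prop :=
  (forall x, Om x -> inRd d x) /\ open_Rd d Om.

Definition compact_Rd (d : nat) (K : (nat -> R) -> Prop) : Prop :=
  (forall x, K x -> inRd d x) /\
  forall (J : Type) (U : J -> (nat -> R) -> Prop),
    (forall j, open_Rd d (U j)) ->
    (forall x, K x -> exists j, U j x) ->
    exists l : list J, forall x, K x -> exists j, In j l /\ U j x.

Definition shift (x : nat -> R) (i : nat) (h : R) : nat -> R :=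
  fun j => if Nat.eqb j i then x j + h else x j.

Section Diff.
Context {k : Kind} (E : LCS k) (d : nat) (Om : (nat -> R) -> Prop).

Definition has_partial (i : nat) (f g : (nat -> R) -> E) : Prop :=
  forall x, Om x ->
    forall (a : idx E) (eps : R), 0 < eps -> exists delta, 0 < delta /\
      forall h, h <> 0 -> Rabs h < delta -> Om (shift x i h) ->
        sn E a (vsub E (vscal E (Kinj (/ h)) (vsub E (f (shift x i h)) (f x))) (g x)) < eps.

Fixpoint is_deriv (l : list nat) (f g : (nat -> R) -> E) : Prop :=
  match l with
  | nil => forall x, Om x -> g x = f x
  | i :: l' => exists h, has_partial i f h /\ is_deriv l' h g
  end.

Definition cont_on (g : (nat -> R) -> E) : Prop :=
  forall x, Om x -> forall (a : idx E) (eps : R), 0 < eps ->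
    exists delta, 0 < delta /\
      forall y, Om y -> dist d x y < delta -> sn E a (vsub E (g y) (g x)) < eps.

Definition dir_ok (l : list nat) : Prop := Forall (fun i => (i < d)%nat) l.

Definition Ck (n : nat) (f : (nat -> R) -> E) : Prop :=
  forall l, (length l <= n)%nat -> dir_ok l ->
    exists g, is_deriv l f g /\ cont_on g.

Definition Ckg_loc (n : nat) (gam : R) (f : (nat -> R) -> E) : Prop :=
  Ck n f /\
  forall K : (nat -> R) -> Prop, compact_Rd d K -> (forall x, K x -> Om x) ->
  forall a : idx E,
    (forall l g, (length l <= n)%nat -> dir_ok l -> is_deriv l f g ->
       exists M, forall x, K x -> sn E a (g x) <= M) /\
    (forall l g, length l = n -> dir_ok l -> is_deriv l f g ->
       exists M, forall x y, K x -> K y -> 0 < dist d x y ->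
         sn E a (vsub E (g x) (g y)) <= M * Rpower (dist d x y) gam).

End Diff.

(* Partial derivatives of f are constructed one at a time as limits of
   difference quotients.  For e in G the scalar function e o f is C^{k,gamma}
   near x, so the mean value theorem bounds
   |e(D_h f(x)) - e(D_h' f(x))| by C_e (|h| + |h'|)^gamma.  Since G determines
   boundedness, every seminorm satisfies the same bound with a constant M_a:
   the difference quotients are Mackey-Cauchy and converge because E is
   locally complete.  The same passage from weak to strong bounds yields the
   continuity of the derivatives and their local Hoelder estimates.  Part (b)
   is part (a) with gamma = 1, because the k-th derivatives of a scalar
   C^{k+1} function are locally Lipschitz. *)

From Stdlib Require Import Reals Lra Lia List ZArith.
From Stdlib Require Import FunctionalExtensionality IndefiniteDescription Classical.
From Coquelicot Require Complex Compactness Derive.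
(* Imported last: Reals also defines [bounded] and [dist]. *)
Open Scope R_scope.

Definition Kre {k : Kind} : Kt k -> R :=
  match k with KReal => fun a => a | KCplx => fun a => fst a end.
Definition Kim {k : Kind} : Kt k -> R :=
  match k with KReal => fun _ => 0 | KCplx => fun a => snd a end.

(* R-linear maps K -> R dominated by the modulus, such as Re and Im: through
   them the real mean value theorem applies to K-valued functions. *)
Definition real_functional {k : Kind} (c : Kt k -> R) : Prop :=
  (forall a b, c (Kadd a b) = c a + c b) /\ (forall a, c (Kopp a) = - c a) /\
  (forall r a, c (Kmul (Kinj r) a) = r * c a) /\ (forall a, Rabs (c a) <= Kabs a).

Lemma sqrt_sum_sq_Cmod (a : R * R) : sqrt (fst a * fst a + snd a * snd a) = Complex.Cmod a.
Proof. unfold Complex.Cmod; f_equal; simpl; ring. Qed.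

Lemma Kre_real_functional {k : Kind} : real_functional (@Kre k).
Proof.
  destruct k; repeat split; simpl; intros; try ring; try apply Rle_refl.
  rewrite sqrt_sum_sq_Cmod; eapply Rle_trans; [apply Rmax_l | apply Complex.Rmax_Cmod].
Qed.

Lemma Kim_real_functional {k : Kind} : real_functional (@Kim k).
Proof.
  destruct k; repeat split; simpl; intros; try ring.
  - rewrite Rabs_R0; apply Rabs_pos.
  - rewrite sqrt_sum_sq_Cmod; eapply Rle_trans; [apply Rmax_r | apply Complex.Rmax_Cmod].
Qed.

Lemma Kabs_le_real_parts {k : Kind} (a : Kt k) : Kabs a <= Rabs (Kre a) + Rabs (Kim a).
Proof.
  destruct k; simpl; [rewrite Rabs_R0; lra |].
  destruct a as [x y]; simpl.
  pose proof (Rabs_pos x); pose proof (Rabs_pos y).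
  rewrite <- (sqrt_square (Rabs x + Rabs y)) by lra.
  apply sqrt_le_1_alt.
  pose proof (Rsqr_abs x); pose proof (Rsqr_abs y); unfold Rsqr in *; nra.
Qed.

Lemma Kabs_le_of_real_functionals {k : Kind} (a : Kt k) (B : R) :
  (forall c, real_functional c -> Rabs (c a) <= B) -> Kabs a <= 2 * B.
Proof.
  intro H; pose proof (Kabs_le_real_parts a).
  pose proof (H _ Kre_real_functional); pose proof (H _ Kim_real_functional); lra.
Qed.

Lemma Kabs_nonneg {k : Kind} (a : Kt k) : 0 <= Kabs a.
Proof. destruct k; simpl; [apply Rabs_pos | apply sqrt_pos]. Qed.

Lemma Kabs_Kinj {k : Kind} (r : R) : @Kabs k (Kinj r) = Rabs r.
Proof.
  destruct k; simpl; [reflexivity |].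
  replace (r * r + 0 * 0) with (r * r) by ring; apply sqrt_Rsqr_abs.
Qed.

Lemma Kmul_Kinj {k : Kind} (a b : R) : Kmul (@Kinj k a) (Kinj b) = Kinj (a * b).
Proof. destruct k; simpl; [reflexivity | f_equal; ring]. Qed.

Lemma Kadd_Kinj {k : Kind} (a b : R) : Kadd (@Kinj k a) (Kinj b) = Kinj (a + b).
Proof. destruct k; simpl; [reflexivity | f_equal; ring]. Qed.

Lemma Kspace_lcHs (k : Kind) : lcHs (Kspace k).
Proof.
  unfold lcHs; destruct k; simpl.
  - do 8 (split; [intros; ring |]).
    split; [intros; apply Rabs_mult |]. split; [intros; apply Rabs_triang |].
    split; [constructor; exact tt |]. split; [intros; exists tt; intros; lra |].
    intros x H; specialize (H tt).
    destruct (Rcase_abs x); [rewrite Rabs_left in H | rewrite Rabs_right in H]; lra.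
  - do 8 (split; [intros [? ?]; intros; simpl; f_equal; ring |]).
    split.
    { intros _ c x; rewrite !sqrt_sum_sq_Cmod, <- (Complex.Cmod_mult c x), <- sqrt_sum_sq_Cmod.
      simpl; f_equal; ring. }
    split.
    { intros _ x y; rewrite !sqrt_sum_sq_Cmod.
      eapply Rle_trans; [| apply (Complex.Cmod_triangle x y)].
      rewrite <- sqrt_sum_sq_Cmod; simpl; right; f_equal; ring. }
    split; [constructor; exact tt |]. split; [intros; exists tt; intros; lra |].
    intros x H; specialize (H tt); rewrite sqrt_sum_sq_Cmod in H.
    apply Complex.Cmod_eq_0 in H; rewrite H; reflexivity.
Qed.

Section SeminormAlgebra.
Context {k : Kind} (E : LCS k) (HE : lcHs E).

Local Ltac lcHs_axiom := destruct HE as (?&?&?&?&?&?&?&?&?&?&?&?&?); auto.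

Lemma vadd_assoc (x y z : E) : vadd E x (vadd E y z) = vadd E (vadd E x y) z.
Proof. lcHs_axiom. Qed.
Lemma vadd_comm (x y : E) : vadd E x y = vadd E y x.
Proof. lcHs_axiom. Qed.
Lemma vadd_0r (x : E) : vadd E x (vzero E) = x.
Proof. lcHs_axiom. Qed.
Lemma vadd_oppr (x : E) : vadd E x (vopp E x) = vzero E.
Proof. lcHs_axiom. Qed.
Lemma vscal_addl c c' (x : E) : vscal E (Kadd c c') x = vadd E (vscal E c x) (vscal E c' x).
Proof. lcHs_axiom. Qed.
Lemma vscal_mul c c' (x : E) : vscal E (Kmul c c') x = vscal E c (vscal E c' x).
Proof. lcHs_axiom. Qed.
Lemma vscal_1 (x : E) : vscal E (Kinj 1) x = x.
Proof. lcHs_axiom. Qed.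
Lemma sn_scal a c (x : E) : sn E a (vscal E c x) = Kabs c * sn E a x.
Proof. lcHs_axiom. Qed.
Lemma sn_triangle a (x y : E) : sn E a (vadd E x y) <= sn E a x + sn E a y.
Proof. lcHs_axiom. Qed.
Lemma sn_separates (x : E) : (forall a, sn E a x = 0) -> x = vzero E.
Proof. lcHs_axiom. Qed.

Lemma vadd_0l (x : E) : vadd E (vzero E) x = x.
Proof. rewrite vadd_comm; apply vadd_0r. Qed.
Lemma vadd_oppl (x : E) : vadd E (vopp E x) x = vzero E.
Proof. rewrite vadd_comm; apply vadd_oppr. Qed.
Lemma vadd_idem_0 (z : E) : vadd E z z = z -> z = vzero E.
Proof.
  intro H; transitivity (vadd E (vadd E z z) (vopp E z)).
  - rewrite <- vadd_assoc, vadd_oppr, vadd_0r; reflexivity.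
  - rewrite H; apply vadd_oppr.
Qed.
Lemma vopp_unique (a x : E) : vadd E a x = vzero E -> a = vopp E x.
Proof. intro H; rewrite <- (vadd_0r a), <- (vadd_oppr x), vadd_assoc, H, vadd_0l; reflexivity. Qed.
Lemma vscal_0l (x : E) : vscal E (Kinj 0) x = vzero E.
Proof. apply vadd_idem_0; rewrite <- vscal_addl, Kadd_Kinj, Rplus_0_l; reflexivity. Qed.
Lemma vopp_scal (x : E) : vopp E x = vscal E (Kinj (-1)) x.
Proof.
  symmetry; apply vopp_unique; rewrite <- (vscal_1 x) at 2.
  rewrite <- vscal_addl, Kadd_Kinj; replace (-1 + 1) with 0 by ring; apply vscal_0l.
Qed.
Lemma vopp_vopp (x : E) : vopp E (vopp E x) = x.
Proof. symmetry; apply vopp_unique, vadd_oppr. Qed.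
Lemma vopp_add (x y : E) : vopp E (vadd E x y) = vadd E (vopp E x) (vopp E y).
Proof.
  symmetry; apply vopp_unique.
  rewrite (vadd_comm x y), <- vadd_assoc, (vadd_assoc (vopp E y)), vadd_oppl, vadd_0l, vadd_oppl.
  reflexivity.
Qed.
Lemma vscal_Kinj_comp a b (x : E) :
  vscal E (Kinj a) (vscal E (Kinj b) x) = vscal E (Kinj (a * b)) x.
Proof. rewrite <- vscal_mul, Kmul_Kinj; reflexivity. Qed.
Lemma vscal_Kinj_invK t (x : E) : t <> 0 -> vscal E (Kinj t) (vscal E (Kinj (/ t)) x) = x.
Proof. intro H; rewrite vscal_Kinj_comp, Rinv_r by exact H; apply vscal_1. Qed.

Lemma vsub_chain (x y z : E) : vsub E x z = vadd E (vsub E x y) (vsub E y z).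
Proof. unfold vsub; rewrite <- vadd_assoc, (vadd_assoc (vopp E y)), vadd_oppl, vadd_0l; reflexivity. Qed.
Lemma vsub_swap (x y : E) : vsub E y x = vopp E (vsub E x y).
Proof. unfold vsub; rewrite vopp_add, vopp_vopp, vadd_comm; reflexivity. Qed.
Lemma vsub_diag (x : E) : vsub E x x = vzero E.
Proof. apply vadd_oppr. Qed.
Lemma vsub_0r (x : E) : vsub E x (vzero E) = x.
Proof. unfold vsub; rewrite <- (vopp_unique (vzero E) (vzero E)) by apply vadd_0r; apply vadd_0r. Qed.
Lemma vsub_eq0 (x y : E) : vsub E x y = vzero E -> x = y.
Proof.
  intro H; rewrite <- (vadd_0r y), <- H; unfold vsub.
  rewrite vadd_comm, <- vadd_assoc, vadd_oppl, vadd_0r; reflexivity.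
Qed.
Lemma vsub_vsubr (x y z : E) : vsub E (vsub E x z) (vsub E y z) = vsub E x y.
Proof.
  change (vadd E (vsub E x z) (vopp E (vsub E y z)) = vsub E x y).
  rewrite <- vsub_swap; symmetry; apply vsub_chain.
Qed.
Lemma vsub_addr (x y z : E) : vsub E x (vadd E y z) = vsub E (vsub E x y) z.
Proof. unfold vsub; rewrite vopp_add, vadd_assoc; reflexivity. Qed.

Lemma sn_scal_Kinj a r (x : E) : sn E a (vscal E (Kinj r) x) = Rabs r * sn E a x.
Proof. rewrite sn_scal, Kabs_Kinj; reflexivity. Qed.
Lemma sn_0 a : sn E a (vzero E) = 0.
Proof. rewrite <- (vscal_0l (vzero E)), sn_scal_Kinj, Rabs_R0; ring. Qed.
Lemma sn_opp a (x : E) : sn E a (vopp E x) = sn E a x.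
Proof. rewrite vopp_scal, sn_scal_Kinj, Rabs_left by lra; ring. Qed.
Lemma sn_nonneg a (x : E) : 0 <= sn E a x.
Proof. pose proof (sn_triangle a x (vopp E x)); rewrite vadd_oppr, sn_0, sn_opp in H; lra. Qed.
Lemma sn_sub_triangle a (x y z : E) :
  sn E a (vsub E x z) <= sn E a (vsub E x y) + sn E a (vsub E y z).
Proof. rewrite (vsub_chain x y z); apply sn_triangle. Qed.
Lemma sn_sub_sym a (x y : E) : sn E a (vsub E x y) = sn E a (vsub E y x).
Proof. rewrite (vsub_swap x y), sn_opp; reflexivity. Qed.
Lemma sn_sub_le a (x y : E) : sn E a (vsub E x y) <= sn E a x + sn E a y.
Proof.
  pose proof (sn_sub_triangle a x (vzero E) y).
  rewrite vsub_0r, (sn_sub_sym a (vzero E)), vsub_0r in H; exact H.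
Qed.
Lemma sn_le_sub a (x y : E) : sn E a x <= sn E a y + sn E a (vsub E x y).
Proof. pose proof (sn_sub_triangle a x y (vzero E)); rewrite !vsub_0r in H; lra. Qed.

Lemma dual_sub (e : E -> Kt k) x y :
  in_dual E e -> e (vsub E x y) = vsub (Kspace k) (e x) (e y).
Proof.
  intros (Ha & Hs & _); unfold vsub; rewrite Ha; simpl; f_equal.
  rewrite vopp_scal, Hs; destruct k; simpl; [ring | f_equal; ring].
Qed.

Lemma dual_bound (e : E -> Kt k) :
  in_dual E e -> exists a C, 0 < C /\ forall x, Kabs (e x) <= C * sn E a x.
Proof.
  intros (_ & _ & a & C & H); exists a, (Rabs C + 1); split; [pose proof (Rabs_pos C); lra |].
  intro x; eapply Rle_trans; [apply H |].
  pose proof (sn_nonneg a x); pose proof (Rle_abs C); nra.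
Qed.

End SeminormAlgebra.

Lemma Kabs_Kmul_Kinj {k : Kind} (r : R) (a : Kt k) : Kabs (Kmul (Kinj r) a) = Rabs r * Kabs a.
Proof. exact (sn_scal_Kinj (Kspace k) (Kspace_lcHs k) tt r a). Qed.

Lemma seminorm_bound_of_weak_bound {k : Kind} (E : LCS k) (G : (E -> Kt k) -> Prop) :
  lcHs E -> dual_subspace E G -> determines_boundedness E G ->
  forall {P : Type} (S : P -> Prop) (v : P -> E) (w : P -> R),
    (forall p, S p -> 0 < w p) ->
    (forall e, G e -> exists C, forall p, S p -> Kabs (e (v p)) <= C * w p) ->
    exists M : idx E -> R, forall a p, S p -> sn E a (v p) <= M a * w p.
Proof.
  intros HE HG HGb P S v w Hw Hweak; apply (functional_choice (fun a M =>
    forall p, S p -> sn E a (v p) <= M * w p)); intro a.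
  set (B := fun u => exists p, S p /\ u = vscal E (Kinj (/ w p)) (v p)).
  assert (HB : bounded E B).
  { apply HGb; intros e He; destruct (Hweak e He) as [C HC]; exists C.
    intros u (p & Hp & ->); pose proof (Hw p Hp).
    rewrite (proj1 (proj2 (proj1 HG e He))), Kabs_Kmul_Kinj, Rabs_right
      by (left; apply Rinv_0_lt_compat; lra).
    specialize (HC p Hp); apply Rmult_le_reg_l with (w p); [lra |].
    rewrite <- Rmult_assoc, Rinv_r by lra; lra. }
  destruct (HB a) as [M HM]; exists M; intros p Hp; pose proof (Hw p Hp).
  rewrite <- (vscal_Kinj_invK E HE (w p) (v p)) by lra.
  rewrite (sn_scal_Kinj E HE), Rabs_right by lra; rewrite Rmult_comm.
  apply Rmult_le_compat_r; [lra | apply HM; exists p; auto].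
Qed.

Lemma Rabs_le_between a b : Rabs a <= b -> - b <= a <= b.
Proof. intro H; destruct (Rcase_abs a); [rewrite Rabs_left in H | rewrite Rabs_right in H]; lra. Qed.

Lemma Rabs_le_between_0 t T : Rmin 0 T <= t <= Rmax 0 T -> Rabs t <= Rabs T.
Proof.
  unfold Rmin, Rmax; intro H; destruct (Rle_dec 0 T).
  - rewrite (Rabs_right T) by lra; apply Rabs_le; lra.
  - rewrite (Rabs_left T) by lra; apply Rabs_le; lra.
Qed.

Lemma sumsq_nonneg d x y : 0 <= sumsq d x y.
Proof. induction d; simpl; [lra | pose proof (Rle_0_sqr (x d - y d)); unfold Rsqr in *; lra]. Qed.
Lemma sumsq_sym d x y : sumsq d x y = sumsq d y x.
Proof. induction d; simpl; [reflexivity | rewrite IHd; ring]. Qed.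
Lemma dist_nonneg d x y : 0 <= dist d x y.
Proof. apply sqrt_pos. Qed.
Lemma dist_sym d x y : dist d x y = dist d y x.
Proof. unfold dist; rewrite sumsq_sym; reflexivity. Qed.

Lemma coord_le_dist d x y i : (i < d)%nat -> Rabs (x i - y i) <= dist d x y.
Proof.
  intro Hi; unfold dist; rewrite <- sqrt_Rsqr_abs; apply sqrt_le_1_alt; unfold Rsqr.
  induction d as [| d IH]; [lia | simpl].
  pose proof (sumsq_nonneg d x y); pose proof (Rle_0_sqr (x d - y d)); unfold Rsqr in *.
  destruct (Nat.eq_dec i d) as [-> | Hne]; [lra |].
  specialize (IH ltac:(lia)); lra.
Qed.

Lemma dist_le_coord_max d x y m : 0 <= m ->
  (forall i, (i < d)%nat -> Rabs (x i - y i) <= m) -> dist d x y <= (INR d + 1) * m.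
Proof.
  intros Hm H.
  assert (Hsq : sumsq d x y <= INR d * (m * m)).
  { induction d as [| d IH]; [simpl; lra |]; rewrite S_INR; simpl.
    assert (IHd : sumsq d x y <= INR d * (m * m)) by (apply IH; intros; apply H; lia).
    specialize (H d ltac:(lia)); pose proof (Rabs_pos (x d - y d)).
    pose proof (Rsqr_abs (x d - y d)); unfold Rsqr in *; nra. }
  pose proof (pos_INR d); unfold dist.
  rewrite <- (sqrt_square ((INR d + 1) * m)) by nra; apply sqrt_le_1_alt; nra.
Qed.

Lemma dist_eq0 d x y : inRd d x -> inRd d y -> dist d x y = 0 -> x = y.
Proof.
  intros Hx Hy H; apply functional_extensionality; intro i.
  destruct (Nat.lt_ge_cases i d) as [Hi | Hi]; [| rewrite Hx, Hy; auto].
  pose proof (coord_le_dist d x y i Hi); rewrite H in H0.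
  destruct (Rcase_abs (x i - y i)); [rewrite Rabs_left in H0 | rewrite Rabs_right in H0]; lra.
Qed.

Lemma shift_0 x i : shift x i 0 = x.
Proof. apply functional_extensionality; intro j; unfold shift; destruct (Nat.eqb j i); lra. Qed.
Lemma shift_shift x i t s : shift (shift x i t) i s = shift x i (t + s).
Proof. apply functional_extensionality; intro j; unfold shift; destruct (Nat.eqb j i); lra. Qed.
Lemma shift_inRd d x i h : inRd d x -> (i < d)%nat -> inRd d (shift x i h).
Proof. intros Hx Hi j Hj; unfold shift; destruct (Nat.eqb_spec j i); [lia | auto]. Qed.

Lemma dist_shift d x i h : (i < d)%nat -> dist d x (shift x i h) = Rabs h.
Proof.
  intro Hi; unfold dist; rewrite <- sqrt_Rsqr_abs; f_equal; unfold Rsqr.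
  induction d as [| d IH]; [lia | simpl].
  assert (Hfar : forall n, (n <= i)%nat -> sumsq n x (shift x i h) = 0).
  { induction n; intro Hn; simpl; [reflexivity |].
    rewrite IHn by lia; unfold shift; replace (Nat.eqb n i) with false
      by (symmetry; apply Nat.eqb_neq; lia); ring. }
  unfold shift at 2 3; destruct (Nat.eqb_spec d i) as [-> | Hne].
  - rewrite Hfar by lia; ring.
  - rewrite IH by lia; ring.
Qed.

Lemma dist_shift_shift d x i t t' :
  (i < d)%nat -> dist d (shift x i t) (shift x i t') = Rabs (t' - t).
Proof.
  intro Hi; replace (shift x i t') with (shift (shift x i t) i (t' - t)).
  - apply dist_shift, Hi.
  - rewrite shift_shift; f_equal; ring.
Qed.

Definition cube (d : nat) (z : nat -> R) (r : R) (y : nat -> R) : Prop :=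
  inRd d y /\ forall i, (i < d)%nat -> Rabs (y i - z i) <= r.

Lemma cube_center d z r : inRd d z -> 0 <= r -> cube d z r z.
Proof. intros Hz Hr; split; auto; intros; rewrite Rminus_diag, Rabs_R0; exact Hr. Qed.

Lemma cube_dist d z r y w : 0 <= r -> cube d z r y -> cube d z r w ->
  dist d y w <= (INR d + 1) * (2 * r).
Proof.
  intros Hr [_ Hy] [_ Hw]; apply dist_le_coord_max; [lra |]; intros i Hi.
  replace (y i - w i) with ((y i - z i) - (w i - z i)) by ring.
  eapply Rle_trans; [apply Rabs_triang | rewrite Rabs_Ropp].
  specialize (Hy i Hi); specialize (Hw i Hi); lra.
Qed.

Lemma cube_in_open d Om x eps : open_domain d Om -> Om x -> 0 < eps ->
  exists r, 0 < r /\ r <= eps /\ (forall y, cube d x r y -> Om y) /\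
    (forall y w, cube d x r y -> cube d x r w -> dist d y w <= 1).
Proof.
  intros [Hin Hop] Hx He; destruct (Hop x (Hin x Hx) Hx) as [rho [Hrho Hball]].
  pose proof (pos_INR d).
  set (r := Rmin eps (Rmin (rho / (INR d + 2)) (/ (2 * (INR d + 1))))).
  assert (Hr1 : r <= eps) by apply Rmin_l.
  assert (Hr2 : r <= rho / (INR d + 2)) by (eapply Rle_trans; [apply Rmin_r | apply Rmin_l]).
  assert (Hr3 : r <= / (2 * (INR d + 1))) by (eapply Rle_trans; [apply Rmin_r | apply Rmin_r]).
  assert (Hr0 : 0 < r).
  { apply Rmin_glb_lt; [exact He |]; apply Rmin_glb_lt.
    - apply Rdiv_lt_0_compat; lra.
    - apply Rinv_0_lt_compat; lra. }
  exists r; repeat split; auto.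
  - intros y Hy; apply Hball; [apply Hy |].
    eapply Rle_lt_trans.
    { apply (dist_le_coord_max d x y r); [lra |]; intros i Hi.
      rewrite Rabs_minus_sym; apply Hy, Hi. }
    apply Rmult_le_compat_l with (r := INR d + 2) in Hr2; [| lra].
    replace ((INR d + 2) * (rho / (INR d + 2))) with rho in Hr2 by (field; lra); nra.
  - intros y w Hy Hw; eapply Rle_trans; [apply (cube_dist d x r); auto; lra |].
    apply Rmult_le_compat_l with (r := 2 * (INR d + 1)) in Hr3; [| lra].
    rewrite Rinv_r in Hr3 by lra; lra.
Qed.

Lemma list_common_upper_bound {J : Type} (l : list J) (P : J -> R -> Prop) :
  (forall j, In j l -> exists M, forall M', M <= M' -> P j M') ->
  exists M, 0 <= M /\ forall j, In j l -> forall M', M <= M' -> P j M'.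
Proof.
  induction l as [| a l IH]; intro H; [exists 0; split; [lra | intros j []] |].
  destruct IH as [M [HM0 HM]]; [intros; apply H; right; auto |].
  destruct (H a (or_introl eq_refl)) as [Ma HMa].
  exists (Rmax M Ma); split; [eapply Rle_trans; [exact HM0 | apply Rmax_l] |].
  intros j [<- | Hj] M' HM'.
  - apply HMa; eapply Rle_trans; [apply Rmax_r | exact HM'].
  - apply HM; auto; eapply Rle_trans; [apply Rmax_l | exact HM'].
Qed.

Lemma list_common_lower_bound {J : Type} (l : list J) (P : J -> R -> Prop) :
  (forall j, In j l -> exists s, 0 < s /\ forall t, 0 < t -> t <= s -> P j t) ->
  exists s, 0 < s /\ forall j, In j l -> forall t, 0 < t -> t <= s -> P j t.
Proof.
  induction l as [| a l IH]; intro H; [exists 1; split; [lra | intros j []] |].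
  destruct IH as [s [Hs0 Hs]]; [intros; apply H; right; auto |].
  destruct (H a (or_introl eq_refl)) as [sa [Hsa0 Hsa]].
  exists (Rmin s sa); split; [apply Rmin_glb_lt; auto |].
  intros j [<- | Hj] t Ht Hts.
  - apply Hsa; auto; eapply Rle_trans; [exact Hts | apply Rmin_r].
  - apply Hs; auto; eapply Rle_trans; [exact Hts | apply Rmin_l].
Qed.

Lemma index_common_upper_bound n (P : nat -> R -> Prop) :
  (forall j, (j < n)%nat -> exists M, forall M', M <= M' -> P j M') ->
  exists M, 0 <= M /\ forall j, (j < n)%nat -> forall M', M <= M' -> P j M'.
Proof.
  intro H; destruct (list_common_upper_bound (seq 0 n) P) as [M [HM0 HM]].
  - intros j Hj; apply H; apply in_seq in Hj; lia.
  - exists M; split; [exact HM0 |]; intros j Hj; apply HM, in_seq; lia.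
Qed.

Lemma index_common_lower_bound n (P : nat -> R -> Prop) :
  (forall j, (j < n)%nat -> exists s, 0 < s /\ forall t, 0 < t -> t <= s -> P j t) ->
  exists s, 0 < s /\ forall j, (j < n)%nat -> forall t, 0 < t -> t <= s -> P j t.
Proof.
  intro H; destruct (list_common_lower_bound (seq 0 n) P) as [s [Hs0 Hs]].
  - intros j Hj; apply H; apply in_seq in Hj; lia.
  - exists s; split; [exact Hs0 |]; intros j Hj; apply Hs, in_seq; lia.
Qed.

Lemma nat_gt_real (r : R) : exists n : nat, r < INR n.
Proof.
  destruct (archimed r) as [H1 _]; destruct (Z_lt_le_dec (up r) 0) as [Hneg | Hnn].
  - exists 0%nat; apply IZR_lt in Hneg; simpl; lra.
  - exists (Z.to_nat (up r)); rewrite INR_IZR_INZ, Z2Nat.id; auto.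
Qed.

(* Coordinates of R^d as Coquelicot's iterated products [Tn d R]. *)
Fixpoint to_Tn (n : nat) (x : nat -> R) : Compactness.Tn n R :=
  match n with O => tt | S n' => (x O, to_Tn n' (fun j => x (S j))) end.
Fixpoint of_Tn (n : nat) : Compactness.Tn n R -> nat -> R :=
  match n with
  | O => fun _ _ => 0
  | S n' => fun t j => match j with O => fst t | S j' => of_Tn n' (snd t) j' end
  end.

Lemma of_to_Tn n x i : (i < n)%nat -> of_Tn n (to_Tn n x) i = x i.
Proof.
  revert x i; induction n; intros x i Hi; [lia |].
  destruct i; simpl; [reflexivity | apply (IHn (fun j => x (S j))); lia].
Qed.
Lemma of_Tn_inRd n t : inRd n (of_Tn n t).
Proof.
  revert t; induction n; intros t i Hi; [reflexivity |].
  destruct i; [lia | apply IHn; lia].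
Qed.
Lemma bounded_n_coord n a b t : Compactness.bounded_n n a b t <->
  forall i, (i < n)%nat -> of_Tn n a i <= of_Tn n t i <= of_Tn n b i.
Proof.
  revert a b t; induction n; intros a b t; simpl; [split; auto; intros; lia |].
  destruct a as [a1 a2], b as [b1 b2], t as [t1 t2]; simpl; rewrite IHn; split.
  - intros [H1 H2] [| i] Hi; simpl; auto; apply H2; lia.
  - intro H; split; [apply (H 0%nat); lia | intros i Hi; apply (H (S i)); lia].
Qed.
Lemma close_n_coord n dl x t : Compactness.close_n n dl x t <->
  forall i, (i < n)%nat -> Rabs (of_Tn n x i - of_Tn n t i) < dl.
Proof.
  revert x t; induction n; intros x t; simpl; [split; auto; intros; lia |].
  destruct x as [x1 x2], t as [t1 t2]; simpl; rewrite IHn; split.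
  - intros [H1 H2] [| i] Hi; simpl; auto; apply H2; lia.
  - intro H; split; [apply (H 0%nat); lia | intros i Hi; apply (H (S i)); lia].
Qed.

(* Heine-Borel for cubes, via Coquelicot's gauge compactness of boxes. *)
Lemma cube_compact d z r : compact_Rd d (cube d z r).
Proof.
  split; [intros x [Hx _]; exact Hx |].
  intros J U HU Hcov.
  destruct (classic (exists p, cube d z r p)) as [[p Hp] | Hempty].
  2: { exists nil; intros x Hx; exfalso; apply Hempty; exists x; exact Hx. }
  destruct (Hcov p Hp) as [j0 _]; pose proof (pos_INR d).
  assert (Hgauge : forall t : Compactness.Tn d R, exists jd : J * posreal,
     cube d z r (of_Tn d t) -> forall y, inRd d y ->
       dist d (of_Tn d t) y < (INR d + 2) * snd jd -> U (fst jd) y).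
  { intro t; destruct (classic (cube d z r (of_Tn d t))) as [Ht | Ht].
    - destruct (Hcov _ Ht) as [j Hj].
      destruct (HU j (of_Tn d t) (proj1 Ht) Hj) as [rho [Hrho Hball]].
      assert (Hpos : 0 < rho / (INR d + 2)) by (apply Rdiv_lt_0_compat; lra).
      exists (j, mkposreal _ Hpos); intros _ y Hy Hdy; apply Hball; auto; simpl in Hdy.
      replace ((INR d + 2) * (rho / (INR d + 2))) with rho in Hdy by (field; lra); exact Hdy.
    - exists (j0, mkposreal 1 Rlt_0_1); intro; contradiction. }
  destruct (functional_choice _ Hgauge) as [F HF].
  pose proof (Compactness.compactness_list d (to_Tn d (fun i => z i - r))
    (to_Tn d (fun i => z i + r)) (fun t => snd (F t))) as Hc.
  apply NNPP in Hc; destruct Hc as [l Hl].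
  exists (map (fun t => fst (F t)) l); intros x Hx.
  destruct (Hl (to_Tn d x)) as [t [Htl [Htb Htc]]].
  { apply bounded_n_coord; intros i Hi; rewrite !of_to_Tn by exact Hi.
    destruct Hx as [_ Hx]; specialize (Hx i Hi); apply Rabs_le_between in Hx; lra. }
  exists (fst (F t)); split; [apply in_map_iff; exists t; auto |].
  rewrite bounded_n_coord in Htb; rewrite close_n_coord in Htc.
  assert (Hct : cube d z r (of_Tn d t)).
  { split; [apply of_Tn_inRd |]; intros i Hi; specialize (Htb i Hi).
    rewrite !of_to_Tn in Htb by exact Hi; apply Rabs_le; lra. }
  apply (HF t Hct x (proj1 Hx)).
  pose proof (cond_pos (snd (F t))).
  eapply Rle_lt_trans; [apply (dist_le_coord_max d (of_Tn d t) x (snd (F t))); [lra |] |].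
  - intros i Hi; specialize (Htc i Hi); rewrite of_to_Tn in Htc by exact Hi.
    rewrite Rabs_minus_sym; lra.
  - apply Rmult_lt_compat_r; lra.
Qed.

Definition diff_quot {k : Kind} (T : LCS k) (f : (nat -> R) -> T) (x : nat -> R) (i : nat)
  (h : R) : T :=
  vscal T (Kinj (/ h)) (vsub T (f (shift x i h)) (f x)).

Lemma shift_in_open d Om x i : open_domain d Om -> Om x -> (i < d)%nat ->
  exists rho, 0 < rho /\ forall h, Rabs h < rho -> Om (shift x i h).
Proof.
  intros [Hin Hop] Hx Hi; destruct (Hop x (Hin x Hx) Hx) as [rho [Hrho Hball]].
  exists rho; split; [exact Hrho |]; intros h Hh.
  apply Hball; [apply shift_inRd; auto | rewrite dist_shift; auto].
Qed.

Section PartialDerivatives.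
Context {k : Kind} (E : LCS k) (HE : lcHs E) (d : nat) (Om : (nat -> R) -> Prop)
  (HOm : open_domain d Om).

Lemma has_partial_ext i f1 f2 g1 g2 :
  (forall x, Om x -> f1 x = f2 x) -> (forall x, Om x -> g1 x = g2 x) ->
  has_partial E Om i f1 g1 -> has_partial E Om i f2 g2.
Proof.
  intros Hf Hg H x Hx a eps Heps; destruct (H x Hx a eps Heps) as [del [Hdel Hb]].
  exists del; split; [exact Hdel |]; intros h Hh Hh' Hs.
  rewrite <- !Hf, <- Hg by auto; apply Hb; auto.
Qed.

Lemma has_partial_unique i f g1 g2 : (i < d)%nat ->
  has_partial E Om i f g1 -> has_partial E Om i f g2 -> forall x, Om x -> g1 x = g2 x.
Proof.
  intros Hi H1 H2 x Hx; apply (vsub_eq0 E HE), (sn_separates E HE); intro a.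
  assert (Hsmall : forall eps, 0 < eps -> sn E a (vsub E (g1 x) (g2 x)) < 2 * eps).
  { intros eps Heps.
    destruct (H1 x Hx a eps Heps) as [d1 [Hd1 Hb1]], (H2 x Hx a eps Heps) as [d2 [Hd2 Hb2]].
    destruct (shift_in_open d Om x i HOm Hx Hi) as [rho [Hrho Hs]].
    set (h := Rmin d1 (Rmin d2 rho) / 2).
    assert (Hm : 0 < Rmin d1 (Rmin d2 rho)) by (repeat apply Rmin_glb_lt; auto).
    assert (Hh : Rabs h < Rmin d1 (Rmin d2 rho)) by (unfold h; rewrite Rabs_right; lra).
    pose proof (Rmin_l d1 (Rmin d2 rho)); pose proof (Rmin_r d1 (Rmin d2 rho)).
    pose proof (Rmin_l d2 rho); pose proof (Rmin_r d2 rho).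
    assert (Hh0 : h <> 0) by (unfold h; lra).
    specialize (Hb1 h Hh0 ltac:(lra) (Hs h ltac:(lra))).
    specialize (Hb2 h Hh0 ltac:(lra) (Hs h ltac:(lra))).
    eapply Rle_lt_trans; [apply (sn_sub_triangle E HE) with (y := diff_quot E f x i h) |].
    unfold diff_quot; rewrite (sn_sub_sym E HE a (g1 x)); lra. }
  pose proof (sn_nonneg E HE a (vsub E (g1 x) (g2 x))) as Hnn.
  destruct Hnn as [Hpos | Hz]; [| auto].
  specialize (Hsmall _ (Rmult_lt_0_compat _ _ Hpos (Rinv_0_lt_compat 2 ltac:(lra)))); lra.
Qed.

Lemma is_deriv_ext l f1 f2 g1 g2 :
  (forall x, Om x -> f1 x = f2 x) -> (forall x, Om x -> g1 x = g2 x) ->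
  is_deriv E Om l f1 g1 -> is_deriv E Om l f2 g2.
Proof.
  revert f1 f2; induction l as [| i l IH]; intros f1 f2 Hf Hg H; simpl in *.
  - intros x Hx; rewrite <- Hg, <- Hf by exact Hx; auto.
  - destruct H as [h [Hh Hl]]; exists h; split.
    + apply has_partial_ext with f1 h; auto.
    + apply IH with h; auto.
Qed.

Lemma is_deriv_unique l f g1 g2 : dir_ok d l ->
  is_deriv E Om l f g1 -> is_deriv E Om l f g2 -> forall x, Om x -> g1 x = g2 x.
Proof.
  revert f; induction l as [| i l IH]; intros f Hl H1 H2 x Hx; simpl in *.
  - rewrite H1, H2; auto.
  - inversion Hl; subst.
    destruct H1 as [h1 [Hh1 Hl1]], H2 as [h2 [Hh2 Hl2]].
    apply IH with h1; auto; apply is_deriv_ext with h2 g2; auto.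
    intros; symmetry; apply (has_partial_unique i f h1 h2); auto.
Qed.

Lemma is_deriv_snoc_inv l j f g : is_deriv E Om (l ++ j :: nil) f g ->
  exists h, is_deriv E Om l f h /\ has_partial E Om j h g.
Proof.
  revert f; induction l as [| i l IH]; intros f H; simpl in *.
  - destruct H as [h [Hh Hn]]; exists f; split; [auto |].
    apply has_partial_ext with f h; auto; intros; symmetry; auto.
  - destruct H as [h [Hh Hl]]; destruct (IH h Hl) as [h2 [H2 H3]].
    exists h2; split; [exists h |]; auto.
Qed.

Lemma is_deriv_cons_inv i l f F g : (i < d)%nat -> has_partial E Om i f F ->
  is_deriv E Om (i :: l) f g -> is_deriv E Om l F g.
Proof.
  intros Hi HF [h [Hh Hl]]; apply is_deriv_ext with h g; auto.
  intros; apply (has_partial_unique i f h F); auto.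
Qed.

Lemma Ck_partial n i f F : (i < d)%nat -> has_partial E Om i f F ->
  Ck E d Om (S n) f -> Ck E d Om n F.
Proof.
  intros Hi HF H l Hl Hd; destruct (H (i :: l)) as [g [Hg Hc]].
  - simpl; lia.
  - constructor; auto.
  - exists g; split; [apply is_deriv_cons_inv with i f |]; auto.
Qed.

Lemma Ckg_loc_partial n gam i f F : (i < d)%nat -> has_partial E Om i f F ->
  Ckg_loc E d Om (S n) gam f -> Ckg_loc E d Om n gam F.
Proof.
  intros Hi HF [Hc Hb]; split; [apply Ck_partial with i f; auto |].
  intros K HK HKO a; destruct (Hb K HK HKO a) as [Hsup Hhol]; split.
  - intros l g Hl Hd Hg; apply (Hsup (i :: l) g); [simpl; lia | constructor; auto | exists F; auto].
  - intros l g Hl Hd Hg; apply (Hhol (i :: l) g); [simpl; lia | constructor; auto | exists F; auto].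
Qed.

Lemma diff_quot_comp_dual e f x i h : in_dual E e ->
  e (diff_quot E f x i h) = diff_quot (Kspace k) (fun y => e (f y)) x i h.
Proof. intro He; unfold diff_quot; rewrite (proj1 (proj2 He)), (dual_sub E HE e) by exact He; reflexivity. Qed.

Lemma has_partial_comp_dual e i f F : in_dual E e -> has_partial E Om i f F ->
  has_partial (Kspace k) Om i (fun x => e (f x)) (fun x => e (F x)).
Proof.
  intros He H x Hx a eps Heps; destruct (dual_bound E HE e He) as [b [C [HC HCb]]].
  destruct (H x Hx b (eps / C)) as [del [Hdel Hb]]; [apply Rdiv_lt_0_compat; auto |].
  exists del; split; [exact Hdel |]; intros h Hh Hh' Hs.
  change (Kabs (vsub (Kspace k) (diff_quot (Kspace k) (fun x => e (f x)) x i h) (e (F x))) < eps).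
  rewrite <- (diff_quot_comp_dual e f), <- (dual_sub E HE e) by exact He.
  eapply Rle_lt_trans; [apply HCb |]; specialize (Hb h Hh Hh' Hs).
  apply Rmult_lt_compat_l with (r := C) in Hb; [| exact HC].
  replace (C * (eps / C)) with eps in Hb by (field; lra); exact Hb.
Qed.

Lemma is_deriv_comp_dual e l f g : in_dual E e -> is_deriv E Om l f g ->
  is_deriv (Kspace k) Om l (fun x => e (f x)) (fun x => e (g x)).
Proof.
  intro He; revert f; induction l as [| i l IH]; intros f H; simpl in *.
  - intros x Hx; rewrite H; auto.
  - destruct H as [h [Hh Hl]]; exists (fun x => e (h x)); split.
    + apply has_partial_comp_dual; auto.
    + apply IH; auto.
Qed.

End PartialDerivatives.

Lemma real_functional_sub {k : Kind} (c : Kt k -> R) a b :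
  real_functional c -> c (vsub (Kspace k) a b) = c a - c b.
Proof. intros (Ca & Co & _); unfold vsub; simpl; rewrite Ca, Co; ring. Qed.

Section ScalarMeanValue.
Context {k : Kind} (d : nat) (Om : (nat -> R) -> Prop) (HOm : open_domain d Om).
Local Notation K := (Kspace k).

Lemma real_functional_derivable c phi psi j w t : real_functional c -> (j < d)%nat ->
  has_partial K Om j phi psi -> Om (shift w j t) ->
  derivable_pt_lim (fun s => c (phi (shift w j s))) t (c (psi (shift w j t))).
Proof.
  intros Hc Hj H Hp eps Heps; pose proof Hc as (Ca & Co & Cm & Cb).
  destruct (H _ Hp tt eps Heps) as [d1 [Hd1 Hb]].
  destruct (shift_in_open d Om _ j HOm Hp Hj) as [rho [Hrho Hs]].
  exists (mkposreal _ (Rmin_glb_lt _ _ _ Hd1 Hrho)); intros h Hh Hh'; simpl in Hh'.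
  pose proof (Rmin_l d1 rho); pose proof (Rmin_r d1 rho).
  specialize (Hb h Hh ltac:(lra) (Hs h ltac:(lra))); rewrite shift_shift in Hb.
  eapply Rle_lt_trans; [| exact Hb]; eapply Rle_trans; [| apply Cb]; right.
  unfold diff_quot; rewrite (real_functional_sub c) by exact Hc.
  change (c (vscal K ?a ?b)) with (c (Kmul a b)).
  rewrite Cm, (real_functional_sub c) by exact Hc; f_equal; unfold Rdiv; ring.
Qed.

Lemma real_functional_mvt c phi psi j w T : real_functional c -> (j < d)%nat ->
  has_partial K Om j phi psi ->
  (forall t, Rmin 0 T <= t <= Rmax 0 T -> Om (shift w j t)) ->
  exists th, Rmin 0 T <= th <= Rmax 0 T /\
    c (phi (shift w j T)) - c (phi w) = c (psi (shift w j th)) * T.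
Proof.
  intros Hc Hj H Hseg.
  destruct (Derive.MVT_gen (fun s => c (phi (shift w j s))) 0 T
    (fun s => c (psi (shift w j s)))) as [th [Hth Heq]].
  - intros x Hx; apply Derive.is_derive_Reals, real_functional_derivable;
      [exact Hc | exact Hj | exact H | apply Hseg; lra].
  - intros x Hx; apply derivable_continuous_pt; econstructor.
    apply real_functional_derivable; [exact Hc | exact Hj | exact H | apply Hseg; lra].
  - exists th; split; [exact Hth |]; rewrite shift_0 in Heq; rewrite Heq; ring.
Qed.

Lemma partial_segment_bound phi psi j w T C : (j < d)%nat -> has_partial K Om j phi psi ->
  (forall t, Rmin 0 T <= t <= Rmax 0 T -> Om (shift w j t) /\ Kabs (psi (shift w j t)) <= C) ->
  Kabs (vsub K (phi (shift w j T)) (phi w)) <= 2 * (C * Rabs T).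
Proof.
  intros Hj H Hseg; apply Kabs_le_of_real_functionals; intros c Hc.
  destruct (real_functional_mvt c phi psi j w T Hc Hj H) as [th [Hth Heq]];
    [intros; apply Hseg; auto |].
  rewrite (real_functional_sub c), Heq, Rabs_mult by exact Hc.
  apply Rmult_le_compat_r; [apply Rabs_pos |].
  eapply Rle_trans; [apply (proj2 (proj2 (proj2 Hc))) | apply Hseg; exact Hth].
Qed.

(* The broken line from y to w that changes one coordinate at a time. *)
Definition coord_path (y w : nat -> R) (m : nat) : nat -> R :=
  fun i => if Nat.ltb i m then w i else y i.

Lemma coord_path_cube z r y w m : cube d z r y -> cube d z r w -> cube d z r (coord_path y w m).
Proof.
  intros Hy Hw; split.
  - intros i Hi; unfold coord_path; destruct (Nat.ltb i m); [apply Hw | apply Hy]; exact Hi.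
  - intros i Hi; unfold coord_path; destruct (Nat.ltb i m); [apply Hw | apply Hy]; exact Hi.
Qed.

Lemma coord_path_succ y w m :
  coord_path y w (S m) = shift (coord_path y w m) m (w m - y m).
Proof.
  apply functional_extensionality; intro i; unfold coord_path, shift.
  destruct (Nat.eqb_spec i m) as [-> | Hne].
  - rewrite Nat.ltb_irrefl; replace (Nat.ltb m (S m)) with true by (symmetry; apply Nat.ltb_lt; lia); ring.
  - destruct (Nat.ltb_spec i (S m)), (Nat.ltb_spec i m); auto; lia.
Qed.

Lemma cube_lipschitz phi z r C : (forall y, cube d z r y -> Om y) -> 0 <= C ->
  (forall j, (j < d)%nat -> exists psi, has_partial K Om j phi psi /\
      forall y, cube d z r y -> Kabs (psi y) <= C) ->
  forall y w, cube d z r y -> cube d z r w ->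
    Kabs (vsub K (phi w) (phi y)) <= 2 * C * INR d * dist d y w.
Proof.
  intros HQ HC Hpar y w Hy Hw.
  assert (Hind : forall m, (m <= d)%nat ->
     Kabs (vsub K (phi (coord_path y w m)) (phi y)) <= 2 * C * INR m * dist d y w).
  { induction m as [| m IH]; intro Hm.
    - replace (coord_path y w 0) with y
        by (apply functional_extensionality; intro i; unfold coord_path; destruct i; reflexivity).
      change (Kabs (vsub K (phi y) (phi y))) with (sn K tt (vsub K (phi y) (phi y))).
      rewrite (vsub_diag K (Kspace_lcHs k)), (sn_0 K (Kspace_lcHs k)); simpl; lra.
    - destruct (Hpar m ltac:(lia)) as [psi [Hpsi Hpsib]].
      assert (Hstep : Kabs (vsub K (phi (coord_path y w (S m))) (phi (coord_path y w m)))
                        <= 2 * (C * Rabs (w m - y m))).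
      { rewrite coord_path_succ; apply partial_segment_bound with psi; [lia | exact Hpsi |].
        intros t Ht; assert (Hc : cube d z r (shift (coord_path y w m) m t)).
        { split; [apply shift_inRd; [apply (coord_path_cube z r y w m Hy Hw) | lia] |].
          intros i Hi; unfold shift; destruct (Nat.eqb_spec i m) as [-> | Hne].
          - unfold coord_path; rewrite Nat.ltb_irrefl; apply Rabs_le.
            pose proof (Rabs_le_between _ _ (proj2 Hy m Hi)).
            pose proof (Rabs_le_between _ _ (proj2 Hw m Hi)).
            unfold Rmin, Rmax in Ht; destruct (Rle_dec 0 (w m - y m)); lra.
          - apply (coord_path_cube z r y w m Hy Hw), Hi. }
        split; [apply HQ |]; auto. }
      pose proof (coord_le_dist d y w m ltac:(lia)) as Hcoord; rewrite Rabs_minus_sym in Hcoord.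
      pose proof (sn_sub_triangle K (Kspace_lcHs k) tt (phi (coord_path y w (S m)))
        (phi (coord_path y w m)) (phi y)) as Htri.
      specialize (IH ltac:(lia)); rewrite S_INR.
      change (sn K tt) with (@Kabs k) in Htri; nra. }
  replace w with (coord_path y w d) at 1; [apply Hind; lia |].
  apply functional_extensionality; intro i; unfold coord_path; destruct (Nat.ltb_spec i d); auto.
  rewrite (proj1 Hy), (proj1 Hw); auto.
Qed.

End ScalarMeanValue.

Section HolderExponent.
Context (gam : R) (Hgam : 0 < gam <= 1).

Lemma Rpower_gt_0 s : 0 < Rpower s gam.
Proof. apply exp_pos. Qed.

Lemma ln_le_0 s : 0 < s <= 1 -> ln s <= 0.
Proof.
  intros [Hs Hs1]; rewrite <- ln_1; destruct (Rle_lt_or_eq_dec _ _ Hs1) as [Hlt | ->];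
    [left; apply ln_increasing | right]; auto.
Qed.

Lemma Rpower_ge_self s : 0 < s <= 1 -> s <= Rpower s gam.
Proof.
  intro Hs; pose proof (ln_le_0 s Hs); unfold Rpower.
  rewrite <- (exp_ln s) at 1 by apply Hs.
  destruct (Rle_lt_or_eq_dec _ _ (proj2 Hgam)) as [Hlt | ->]; [| rewrite Rmult_1_l; lra].
  destruct (Rle_lt_or_eq_dec _ _ H) as [Hneg | ->]; [| rewrite Rmult_0_r; lra].
  left; apply exp_increasing; nra.
Qed.

Lemma Rpower_le_1 s : 0 < s <= 1 -> Rpower s gam <= 1.
Proof.
  intro Hs; pose proof (ln_le_0 s Hs); unfold Rpower; rewrite <- exp_0.
  destruct (Rle_lt_or_eq_dec _ _ H) as [Hneg | ->]; [| rewrite Rmult_0_r; lra].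
  left; apply exp_increasing; nra.
Qed.

Lemma Rpower_small eps : 0 < eps ->
  exists del, 0 < del /\ forall s, 0 < s -> s < del -> Rpower s gam < eps.
Proof.
  intro Heps; exists (exp (ln eps / gam)); split; [apply exp_pos |].
  intros s Hs Hsd; unfold Rpower; rewrite <- (exp_ln eps) by exact Heps.
  apply exp_increasing; apply ln_increasing in Hsd; [| exact Hs]; rewrite ln_exp in Hsd.
  apply Rmult_lt_compat_l with (r := gam) in Hsd; [| lra].
  replace (gam * (ln eps / gam)) with (ln eps) in Hsd by (field; lra); lra.
Qed.

End HolderExponent.

Section ScalarRegularity.
Context {k : Kind} (d : nat) (Om : (nat -> R) -> Prop) (HOm : open_domain d Om).
Local Notation K := (Kspace k).

Lemma cont_on_bounded g Kc : cont_on K d Om g -> compact_Rd d Kc -> (forall x, Kc x -> Om x) ->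
  exists M, 0 <= M /\ forall x, Kc x -> Kabs (g x) <= M.
Proof.
  intros Hc [HKin HKc] HKO.
  destruct (HKc nat (fun j y => Om y /\ Kabs (g y) < INR j)) as [l Hl].
  - intros j y Hy [Hyo Hyj]; destruct HOm as [Hin Hop].
    destruct (Hop y Hy Hyo) as [rho [Hrho Hball]].
    destruct (Hc y Hyo tt (INR j - Kabs (g y))) as [del [Hdel Hdb]]; [lra |].
    exists (Rmin rho del); split; [apply Rmin_glb_lt; auto |]; intros y' Hy' Hdy.
    pose proof (Rmin_l rho del); pose proof (Rmin_r rho del).
    assert (Hyo' : Om y') by (apply Hball; auto; lra).
    split; [exact Hyo' |]; specialize (Hdb y' Hyo' ltac:(lra)).
    pose proof (sn_le_sub K (Kspace_lcHs k) tt (g y') (g y)); simpl sn in *; lra.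
  - intros x Hx; destruct (nat_gt_real (Kabs (g x))) as [j Hj]; exists j; auto.
  - destruct (list_common_upper_bound l (fun j M => INR j <= M)) as [M [HM0 HM]];
      [intros j _; exists (INR j); auto |].
    exists M; split; [exact HM0 |]; intros x Hx; destruct (Hl x Hx) as [j [Hjl [_ Hj]]].
    specialize (HM j Hjl M (Rle_refl M)); lra.
Qed.

Lemma holder_on_cube n gam phi z r : 0 < gam <= 1 -> Ckg_loc K d Om n gam phi ->
  (forall y, cube d z r y -> Om y) -> (forall y w, cube d z r y -> cube d z r w -> dist d y w <= 1) ->
  forall l g, (length l <= n)%nat -> dir_ok d l -> is_deriv K Om l phi g ->
  exists C, 0 <= C /\ forall y w, cube d z r y -> cube d z r w -> 0 < dist d y w ->
    Kabs (vsub K (g y) (g w)) <= C * Rpower (dist d y w) gam.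
Proof.
  intros Hgam [Hck Hb] HQ Hdiam l g Hl Hd Hg.
  destruct (Hb (cube d z r) (cube_compact d z r) HQ tt) as [Hsup Hhol].
  destruct (Nat.eq_dec (length l) n) as [Heq | Hne].
  - destruct (Hhol l g Heq Hd Hg) as [M HM]; exists (Rabs M); split; [apply Rabs_pos |].
    intros y w Hy Hw Hdy; eapply Rle_trans; [apply HM; auto |].
    apply Rmult_le_compat_r; [left; apply Rpower_gt_0 | apply Rle_abs].
  - (* below the top order, the derivative is Lipschitz, which is stronger on sets of diameter <= 1 *)
    destruct (index_common_upper_bound d (fun j M => exists psi, has_partial K Om j g psi /\
       forall y, cube d z r y -> Kabs (psi y) <= M)) as [M [HM0 HM]].
    + intros j Hj; destruct (Hck (l ++ j :: nil)) as [g' [Hg' _]];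
        [rewrite length_app; simpl; lia | apply Forall_app; split; auto |].
      destruct (is_deriv_snoc_inv K Om l j phi g' Hg') as [h [Hh Hhp]].
      destruct (Hsup (l ++ j :: nil) g') as [Mj HMj];
        [rewrite length_app; simpl; lia | apply Forall_app; split; auto | exact Hg' |].
      exists Mj; intros M' HM'; exists g'; split.
      * apply (has_partial_ext K Om j h g g' g'); auto.
        intros x Hx; apply (is_deriv_unique K (Kspace_lcHs k) d Om HOm l phi); auto.
      * intros y Hy; eapply Rle_trans; [apply HMj |]; auto.
    + exists (2 * M * INR d); split; [pose proof (pos_INR d); nra |].
      intros y w Hy Hw Hdy.
      change (Kabs (vsub K (g y) (g w))) with (sn K tt (vsub K (g y) (g w))).
      rewrite (sn_sub_sym K (Kspace_lcHs k) tt); change (sn K tt) with (@Kabs k).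
      eapply Rle_trans; [apply (cube_lipschitz d Om HOm g z r M HQ HM0); auto |].
      * intros j Hj; apply HM; auto; lra.
      * pose proof (pos_INR d); apply Rmult_le_compat_l; [nra |].
        apply Rpower_ge_self; auto.
Qed.

Lemma real_functional_diff_quot c phi psi x i h : real_functional c -> (i < d)%nat ->
  has_partial K Om i phi psi -> h <> 0 ->
  (forall t, Rabs t <= Rabs h -> Om (shift x i t)) ->
  exists th, Rabs th <= Rabs h /\ c (diff_quot K phi x i h) = c (psi (shift x i th)).
Proof.
  intros Hc Hi Hp Hh Hseg.
  destruct (real_functional_mvt d Om HOm c phi psi i x h Hc Hi Hp) as [th [Hth Heq]].
  - intros t Ht; apply Hseg, Rabs_le_between_0, Ht.
  - exists th; split; [apply Rabs_le_between_0, Hth |].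
    unfold diff_quot; change (c (vscal K ?a ?b)) with (c (Kmul a b)).
    rewrite (proj1 (proj2 (proj2 Hc))), (real_functional_sub c), Heq by exact Hc.
    field; exact Hh.
Qed.

Lemma diff_quot_holder gam phi psi x i r C : 0 < gam -> (i < d)%nat ->
  has_partial K Om i phi psi -> (forall t, Rabs t <= r -> Om (shift x i t)) -> 0 <= C ->
  (forall t t', Rabs t <= r -> Rabs t' <= r -> t <> t' ->
     Kabs (vsub K (psi (shift x i t)) (psi (shift x i t'))) <= C * Rpower (Rabs (t - t')) gam) ->
  forall h h', 0 < Rabs h <= r -> 0 < Rabs h' <= r ->
    Kabs (vsub K (diff_quot K phi x i h) (diff_quot K phi x i h'))
      <= 2 * (C * Rpower (Rabs h + Rabs h') gam).
Proof.
  intros Hgam Hi Hp Hseg HC Hhol h h' Hh Hh'; apply Kabs_le_of_real_functionals; intros c Hc.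
  assert (Hne : forall u, 0 < Rabs u -> u <> 0) by (intros u Hu ->; rewrite Rabs_R0 in Hu; lra).
  destruct (real_functional_diff_quot c phi psi x i h Hc Hi Hp (Hne h (proj1 Hh)))
    as [th [Hth Heq]]; [intros; apply Hseg; lra |].
  destruct (real_functional_diff_quot c phi psi x i h' Hc Hi Hp (Hne h' (proj1 Hh')))
    as [th' [Hth' Heq']]; [intros; apply Hseg; lra |].
  rewrite (real_functional_sub c), Heq, Heq' by exact Hc.
  destruct (Req_dec th th') as [<- | Hneq].
  - rewrite Rminus_diag, Rabs_R0; pose proof (Rpower_gt_0 gam (Rabs h + Rabs h')); nra.
  - rewrite <- (real_functional_sub c) by exact Hc.
    eapply Rle_trans; [apply Hc | eapply Rle_trans; [apply Hhol; lra |]].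
    apply Rmult_le_compat_l; [exact HC |]; apply Rle_Rpower_l; [lra | split].
    + apply Rabs_pos_lt; lra.
    + eapply Rle_trans; [apply Rabs_triang | rewrite Rabs_Ropp; lra].
Qed.

Lemma diff_quot_holder_of_Ckg_loc n gam phi x r i : 0 < gam <= 1 ->
  Ckg_loc K d Om (S n) gam phi -> (i < d)%nat -> inRd d x ->
  (forall y, cube d x r y -> Om y) -> (forall y w, cube d x r y -> cube d x r w -> dist d y w <= 1) ->
  exists C, forall h h', 0 < Rabs h <= r -> 0 < Rabs h' <= r ->
    Kabs (vsub K (diff_quot K phi x i h) (diff_quot K phi x i h'))
      <= C * Rpower (Rabs h + Rabs h') gam.
Proof.
  intros Hgam Hphi Hi Hx HQ Hdiam.
  assert (Hseg : forall t, Rabs t <= r -> cube d x r (shift x i t)).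
  { intros t Ht; split; [apply shift_inRd; auto |]; intros j Hj; unfold shift.
    destruct (Nat.eqb j i); [replace (x j + t - x j) with t by ring; exact Ht |].
    rewrite Rminus_diag, Rabs_R0; eapply Rle_trans; [apply Rabs_pos | exact Ht]. }
  destruct (proj1 Hphi (i :: nil)) as [g [[psi [Hpsi _]] _]]; [simpl; lia | constructor; auto |].
  destruct (holder_on_cube (S n) gam phi x r Hgam Hphi HQ Hdiam (i :: nil) psi)
    as [C [HC Hhol]]; [simpl; lia | constructor; auto | exists psi; split; simpl; auto |].
  exists (2 * C); intros h h' Hh Hh'; rewrite Rmult_assoc.
  apply (diff_quot_holder gam phi psi x i r C);
    [lra | exact Hi | exact Hpsi | intros t Ht; apply HQ, Hseg, Ht | exact HC | | exact Hh | exact Hh'].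
  intros t t' Ht Ht' Hne; rewrite Rabs_minus_sym, <- (dist_shift_shift d x i t t') by exact Hi.
  apply Hhol; auto; rewrite dist_shift_shift by exact Hi; apply Rabs_pos_lt; lra.
Qed.

End ScalarRegularity.

Lemma eventually_div_succ_lt r t : 0 <= r -> 0 < t ->
  exists N, forall m, (N <= m)%nat -> r / (INR m + 1) < t.
Proof.
  intros Hr Ht; destruct (nat_gt_real (r / t)) as [N HN]; exists N; intros m Hm.
  apply le_INR in Hm; pose proof (pos_INR N).
  apply Rmult_lt_reg_r with (INR m + 1); [lra |].
  unfold Rdiv at 1; rewrite Rmult_assoc, Rinv_l, Rmult_1_r by lra.
  apply Rmult_lt_compat_r with (r := t) in HN; [| exact Ht].
  unfold Rdiv in HN; rewrite Rmult_assoc, Rinv_l, Rmult_1_r in HN by lra; nra.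
Qed.

Section LocallyComplete.
Context {k : Kind} (E : LCS k) (HE : lcHs E) (HLC : locally_complete E).

(* The closed absolutely convex bounded set D = {y | p_a(y) <= M a for all a}
   absorbs the differences u m - u 0, so the sequence is Cauchy in the Banach
   space E_D. *)
Lemma mackey_cauchy_seq_converges (u : nat -> E) (om : nat -> nat -> R) (M : idx E -> R) :
  (forall m p, 0 < om m p <= 1) ->
  (forall a m p, sn E a (vsub E (u m) (u p)) <= om m p * M a) ->
  (forall eps, 0 < eps -> exists N, forall m p, (N <= m)%nat -> (N <= p)%nat -> om m p < eps) ->
  exists L, forall a eps, 0 < eps ->
    exists N, forall m, (N <= m)%nat -> sn E a (vsub E (u m) L) < eps.
Proof.
  intros Hom Hb Hc.
  assert (HM0 : forall a, 0 <= M a).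
  { intro a; pose proof (Hb a 0%nat 0%nat); pose proof (Hom 0%nat 0%nat).
    pose proof (sn_nonneg E HE a (vsub E (u 0%nat) (u 0%nat))); nra. }
  set (D := fun y : E => forall a, sn E a y <= M a).
  assert (HinD : forall t y, 0 < t -> (forall a, sn E a y <= t * M a) -> in_mult E D t y).
  { intros t y Ht Hy; exists (vscal E (Kinj (/ t)) y); split.
    - intro a; rewrite (sn_scal_Kinj E HE), Rabs_right by (left; apply Rinv_0_lt_compat; exact Ht).
      apply Rmult_le_reg_l with t; [exact Ht |].
      rewrite <- Rmult_assoc, Rinv_r by lra; rewrite Rmult_1_l; apply Hy.
    - rewrite (vscal_Kinj_invK E HE) by lra; reflexivity. }
  assert (HD : gauge_Banach E D).
  { apply HLC.
    - intros x Hx a; destruct (Rle_or_lt (sn E a x) (M a)) as [| Hlt]; [assumption |].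
      destruct (Hx a (sn E a x - M a)) as [y [Hy Hxy]]; [lra |].
      pose proof (sn_le_sub E HE a x y); specialize (Hy a); lra.
    - intro a; exists (M a); intros x Hx; apply Hx.
    - intros x y c1 c2 Hx Hy Hcc a; eapply Rle_trans; [apply (sn_triangle E HE) |].
      rewrite !(sn_scal E HE); specialize (Hx a); specialize (Hy a).
      pose proof (Kabs_nonneg c1); pose proof (Kabs_nonneg c2); pose proof (HM0 a); nra. }
  set (v := fun m => vsub E (u m) (u 0%nat)).
  destruct (HD v) as [L0 [_ HL0]].
  - intro m; exists 1%nat; apply HinD; [simpl; lra |]; intro a; unfold v; simpl INR.
    eapply Rle_trans; [apply Hb |]; specialize (Hom m 0%nat); pose proof (HM0 a); nra.
  - intros eps Heps; destruct (Hc eps Heps) as [N HN]; exists N; intros m p Hm Hp.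
    exists (om m p); split; [apply Hom | split; [apply HN; auto |]].
    apply HinD; [apply Hom |]; intro a; unfold v; rewrite (vsub_vsubr E HE); apply Hb.
  - exists (vadd E (u 0%nat) L0); intros a eps Heps; pose proof (HM0 a).
    destruct (HL0 (eps / (M a + 1))) as [N HN]; [apply Rdiv_lt_0_compat; lra |].
    exists N; intros m Hm; destruct (HN m Hm) as [t [Ht [Hte [y [Hy Hyeq]]]]].
    rewrite (vsub_addr E HE); fold (v m); rewrite Hyeq, (sn_scal_Kinj E HE), Rabs_right by lra.
    specialize (Hy a); pose proof (sn_nonneg E HE a y).
    apply Rlt_le_trans with (eps / (M a + 1) * (M a + 1)); [nra | right; field; lra].
Qed.

Lemma limit_0_of_mackey_bound (F : R -> E) (r : R) (om : R -> R) (M : idx E -> R)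
  (hs : nat -> R) (L : E) :
  (forall a, 0 <= M a) ->
  (forall eps, 0 < eps -> exists del, 0 < del /\ forall s, 0 < s -> s < del -> om s < eps) ->
  (forall a h h', 0 < Rabs h <= r -> 0 < Rabs h' <= r ->
     sn E a (vsub E (F h) (F h')) <= om (Rabs h + Rabs h') * M a) ->
  (forall m, 0 < hs m <= r) ->
  (forall t, 0 < t -> exists N, forall m, (N <= m)%nat -> hs m < t) ->
  (forall a eps, 0 < eps ->
     exists N, forall m, (N <= m)%nat -> sn E a (vsub E (F (hs m)) L) < eps) ->
  forall a eps, 0 < eps -> exists del, 0 < del /\
    forall h, h <> 0 -> Rabs h < del -> sn E a (vsub E (F h) L) < eps.
Proof.
  intros HM0 Hsmall Hb Hhs Hhs0 HL a eps Heps; pose proof (HM0 a).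
  destruct (Hsmall (eps / (2 * (M a + 1)))) as [del [Hdel Hdb]]; [apply Rdiv_lt_0_compat; lra |].
  destruct (HL a (eps / 2)) as [N1 HN1]; [lra |].
  destruct (Hhs0 (del / 2)) as [N2 HN2]; [lra |].
  set (m := Nat.max N1 N2); specialize (HN1 m ltac:(lia)); specialize (HN2 m ltac:(lia)).
  pose proof (Hhs m) as Hm; rewrite <- (Rabs_right (hs m)) in HN2 by lra.
  rewrite <- (Rabs_right (hs m)) in Hm by lra.
  exists (Rmin r (del / 2)); split; [apply Rmin_glb_lt; lra |]; intros h Hh Hhd.
  pose proof (Rmin_l r (del / 2)); pose proof (Rmin_r r (del / 2)); pose proof (Rabs_pos_lt h Hh).
  eapply Rle_lt_trans; [apply (sn_sub_triangle E HE a) with (y := F (hs m)) |].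
  specialize (Hb a h (hs m) ltac:(lra) Hm).
  assert (Hom : om (Rabs h + Rabs (hs m)) < eps / (2 * (M a + 1))) by (apply Hdb; lra).
  assert (om (Rabs h + Rabs (hs m)) * M a < eps / 2).
  { apply Rle_lt_trans with (eps / (2 * (M a + 1)) * M a); [apply Rmult_le_compat_r; lra |].
    apply Rmult_lt_reg_r with (2 * (M a + 1)); [lra |].
    replace (eps / (2 * (M a + 1)) * M a * (2 * (M a + 1))) with (eps * M a) by (field; lra).
    nra. }
  lra.
Qed.

Lemma mackey_cauchy_limit_0 (F : R -> E) (r : R) (om : R -> R) (M : idx E -> R) :
  0 < r -> (forall s, 0 < s <= 2 * r -> 0 < om s <= 1) ->
  (forall eps, 0 < eps -> exists del, 0 < del /\ forall s, 0 < s -> s < del -> om s < eps) ->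
  (forall a h h', 0 < Rabs h <= r -> 0 < Rabs h' <= r ->
     sn E a (vsub E (F h) (F h')) <= om (Rabs h + Rabs h') * M a) ->
  exists L, forall a eps, 0 < eps -> exists del, 0 < del /\
    forall h, h <> 0 -> Rabs h < del -> sn E a (vsub E (F h) L) < eps.
Proof.
  intros Hr Hom Hsmall Hb.
  set (hs := fun m : nat => r / (INR m + 1)).
  assert (Hhs : forall m, 0 < hs m <= r).
  { intro m; pose proof (pos_INR m); unfold hs; split; [apply Rdiv_lt_0_compat; lra |].
    apply Rmult_le_reg_r with (INR m + 1); [lra |].
    unfold Rdiv; rewrite Rmult_assoc, Rinv_l by lra; nra. }
  assert (Hhs_abs : forall m, Rabs (hs m) = hs m) by (intro m; apply Rabs_right; pose proof (Hhs m); lra).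
  assert (Hhs0 : forall t, 0 < t -> exists N, forall m, (N <= m)%nat -> hs m < t)
    by (intros; apply eventually_div_succ_lt; lra).
  assert (HM0 : forall a, 0 <= M a).
  { intro a; assert (H0 : 0 < Rabs (hs 0%nat) <= r) by (rewrite Hhs_abs; apply Hhs).
    specialize (Hb a _ _ H0 H0); rewrite (vsub_diag E HE), (sn_0 E HE) in Hb.
    pose proof (Hom (Rabs (hs 0%nat) + Rabs (hs 0%nat)) ltac:(lra)); nra. }
  destruct (mackey_cauchy_seq_converges (fun m => F (hs m))
    (fun m p => om (hs m + hs p)) M) as [L HL].
  - intros m p; apply Hom; pose proof (Hhs m); pose proof (Hhs p); lra.
  - intros a m p; specialize (Hb a (hs m) (hs p)); rewrite !Hhs_abs in Hb; apply Hb; apply Hhs.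
  - intros eps Heps; destruct (Hsmall eps Heps) as [del [Hdel Hdb]].
    destruct (Hhs0 (del / 2)) as [N HN]; [lra |].
    exists N; intros m p Hm Hp; pose proof (Hhs m); pose proof (Hhs p).
    pose proof (HN m Hm); pose proof (HN p Hp); apply Hdb; lra.
  - exists L; apply (limit_0_of_mackey_bound F r om M hs L); auto.
Qed.

End LocallyComplete.

Section WeakRegularity.
Context {k : Kind} (E : LCS k) (HE : lcHs E) (HLC : locally_complete E)
  (G : (E -> Kt k) -> Prop) (HG : dual_subspace E G) (HGb : determines_boundedness E G)
  (d : nat) (Om : (nat -> R) -> Prop) (HOm : open_domain d Om) (gam : R) (Hgam : 0 < gam <= 1).
Local Notation K := (Kspace k).

Lemma has_partial_of_weak n f i :
  (forall e, G e -> Ckg_loc K d Om (S n) gam (fun x => e (f x))) -> (i < d)%nat ->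
  exists F, has_partial E Om i f F.
Proof.
  intros Hweak Hi.
  assert (Hlim : forall x, exists L, Om x -> forall a eps, 0 < eps -> exists del, 0 < del /\
      forall h, h <> 0 -> Rabs h < del -> sn E a (vsub E (diff_quot E f x i h) L) < eps).
  { intro x; destruct (classic (Om x)) as [Hx | Hx]; [| exists (vzero E); contradiction].
    destruct (cube_in_open d Om x (1 / 2) HOm Hx) as [r [Hr [Hr2 [HQ Hdiam]]]]; [lra |].
    set (in_range := fun hh : R * R => 0 < Rabs (fst hh) <= r /\ 0 < Rabs (snd hh) <= r).
    destruct (seminorm_bound_of_weak_bound E G HE HG HGb in_range
      (fun hh => vsub E (diff_quot E f x i (fst hh)) (diff_quot E f x i (snd hh)))
      (fun hh => Rpower (Rabs (fst hh) + Rabs (snd hh)) gam)) as [M HM];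
      [intros; apply Rpower_gt_0 | | ].
    - intros e He; pose proof (proj1 HG e He) as Hdual.
      destruct (diff_quot_holder_of_Ckg_loc d Om HOm n gam (fun y => e (f y)) x r i Hgam
        (Hweak e He) Hi (proj1 HOm x Hx) HQ Hdiam) as [C HC].
      exists C; intros [h h'] [Hh Hh']; simpl.
      rewrite (dual_sub E HE e), !(diff_quot_comp_dual E HE e) by exact Hdual; apply HC; auto.
    - destruct (mackey_cauchy_limit_0 E HE HLC (diff_quot E f x i) r (fun s => Rpower s gam) M Hr)
        as [L HL]; [| apply Rpower_small, Hgam | | exists L; intros _; exact HL].
      + intros s Hs; split; [apply Rpower_gt_0 | apply Rpower_le_1; lra].
      + intros a h h' Hh Hh'; rewrite Rmult_comm; apply (HM a (h, h')); split; auto. }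
  destruct (functional_choice _ Hlim) as [F HF]; exists F; intros x Hx a eps Heps.
  destruct (HF x Hx a eps Heps) as [del [Hdel Hb]]; exists del; split; [exact Hdel |].
  intros h Hh Hhd _; apply Hb; auto.
Qed.

Lemma cont_on_of_weak n f l g :
  (forall e, G e -> Ckg_loc K d Om n gam (fun x => e (f x))) ->
  (length l <= n)%nat -> dir_ok d l -> is_deriv E Om l f g -> cont_on E d Om g.
Proof.
  intros Hweak Hl Hd Hg x Hx a eps Heps; pose proof (proj1 HOm x Hx) as Hxd.
  destruct (cube_in_open d Om x 1 HOm Hx) as [r [Hr [_ [HQ Hdiam]]]]; [lra |].
  destruct (seminorm_bound_of_weak_bound E G HE HG HGb
    (fun y => cube d x r y /\ 0 < dist d x y) (fun y => vsub E (g y) (g x))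
    (fun y => Rpower (dist d x y) gam)) as [M HM]; [intros; apply Rpower_gt_0 | |].
  { intros e He; pose proof (proj1 HG e He) as Hdual.
    destruct (holder_on_cube d Om HOm n gam (fun y => e (f y)) x r Hgam (Hweak e He) HQ Hdiam l
      (fun y => e (g y)) Hl Hd (is_deriv_comp_dual E HE Om e l f g Hdual Hg)) as [C [_ HC]].
    exists C; intros y [Hy Hdy]; rewrite (dual_sub E HE e), (dist_sym d x y) by exact Hdual.
    apply HC; [exact Hy | apply cube_center; [exact Hxd | lra] | rewrite dist_sym; exact Hdy]. }
  pose proof (Rabs_pos (M a)).
  destruct (Rpower_small gam Hgam (eps / (Rabs (M a) + 1))) as [del [Hdel Hsmall]];
    [apply Rdiv_lt_0_compat; lra |].
  exists (Rmin del r); split; [apply Rmin_glb_lt; auto |]; intros y Hy Hdy.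
  pose proof (Rmin_l del r); pose proof (Rmin_r del r).
  destruct (dist_nonneg d x y) as [Hpos | Hz].
  - assert (Hyc : cube d x r y).
    { split; [apply (proj1 HOm y Hy) |]; intros j Hj; rewrite Rabs_minus_sym.
      pose proof (coord_le_dist d x y j Hj); lra. }
    specialize (HM a y (conj Hyc Hpos)); specialize (Hsmall _ Hpos ltac:(lra)).
    pose proof (Rpower_gt_0 gam (dist d x y)).
    apply Rle_lt_trans with (Rabs (M a) * Rpower (dist d x y) gam);
      [eapply Rle_trans; [exact HM | apply Rmult_le_compat_r; [lra | apply Rle_abs]] |].
    apply Rle_lt_trans with (Rabs (M a) * (eps / (Rabs (M a) + 1))); [nra |].
    apply Rmult_lt_reg_r with (Rabs (M a) + 1); [lra |].
    replace (Rabs (M a) * (eps / (Rabs (M a) + 1)) * (Rabs (M a) + 1)) with (Rabs (M a) * eps)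
      by (field; lra); nra.
  - rewrite <- (dist_eq0 d x y Hxd (proj1 HOm y Hy) (eq_sym Hz)), (vsub_diag E HE), (sn_0 E HE).
    exact Heps.
Qed.

Lemma is_deriv_of_weak l : forall n f, (length l <= n)%nat -> dir_ok d l ->
  (forall e, G e -> Ckg_loc K d Om n gam (fun x => e (f x))) -> exists g, is_deriv E Om l f g.
Proof.
  induction l as [| i l IH]; intros n f Hl Hd Hweak; [exists f; simpl; auto |].
  destruct n as [| n]; [simpl in Hl; lia |]; inversion Hd; subst.
  destruct (has_partial_of_weak n f i Hweak ltac:(assumption)) as [F HF].
  destruct (IH n F) as [g Hg]; [simpl in Hl; lia | assumption | |].
  - intros e He; apply (Ckg_loc_partial K (Kspace_lcHs k) d Om HOm n gam i (fun x => e (f x)));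
      [assumption | | apply Hweak, He].
    apply (has_partial_comp_dual E HE Om e i f F); [apply HG, He | exact HF].
  - exists g, F; split; assumption.
Qed.

Lemma Ckg_loc_of_weak n f :
  (forall e, G e -> Ckg_loc K d Om n gam (fun x => e (f x))) -> Ckg_loc E d Om n gam f.
Proof.
  intro Hweak; split.
  - intros l Hl Hd; destruct (is_deriv_of_weak l n f Hl Hd Hweak) as [g Hg].
    exists g; split; [exact Hg | apply (cont_on_of_weak n f l g); auto].
  - intros Kc HKc HKO a; split; intros l g Hl Hd Hg.
    + destruct (seminorm_bound_of_weak_bound E G HE HG HGb Kc g (fun _ => 1)) as [M HM];
        [intros; lra | |].
      * intros e He; destruct (proj2 (Hweak e He) Kc HKc HKO tt) as [Hsup _].
        destruct (Hsup l (fun x => e (g x)) Hl Hd) as [C HC];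
          [apply (is_deriv_comp_dual E HE Om); [apply HG, He | exact Hg] |].
        exists C; intros x Hx; rewrite Rmult_1_r; apply HC, Hx.
      * exists (M a); intros x Hx; rewrite <- (Rmult_1_r (M a)); apply HM, Hx.
    + destruct (seminorm_bound_of_weak_bound E G HE HG HGb
        (fun xy => Kc (fst xy) /\ Kc (snd xy) /\ 0 < dist d (fst xy) (snd xy))
        (fun xy => vsub E (g (fst xy)) (g (snd xy)))
        (fun xy => Rpower (dist d (fst xy) (snd xy)) gam)) as [M HM];
        [intros; apply Rpower_gt_0 | |].
      * intros e He; pose proof (proj1 HG e He) as Hdual.
        destruct (proj2 (Hweak e He) Kc HKc HKO tt) as [_ Hhol].
        destruct (Hhol l (fun x => e (g x)) Hl Hd) as [C HC];
          [apply (is_deriv_comp_dual E HE Om); [exact Hdual | exact Hg] |].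
        exists C; intros [x y] (Hx & Hy & Hxy); simpl.
        rewrite (dual_sub E HE e) by exact Hdual; apply HC; auto.
      * exists (M a); intros x y Hx Hy Hxy; apply (HM a (x, y)); simpl; auto.
Qed.

End WeakRegularity.

Section ScalarLipschitz.
Context {k : Kind} (d : nat) (Om : (nat -> R) -> Prop) (HOm : open_domain d Om).
Local Notation K := (Kspace k).

(* A Lebesgue number for a cover of a compact set by cubes inside Om. *)
Lemma compact_cube_cover Kc : compact_Rd d Kc -> (forall x, Kc x -> Om x) ->
  exists (zs : list ((nat -> R) * R)) r0, 0 < r0 /\
    (forall zr, In zr zs -> forall y, cube d (fst zr) (snd zr) y -> Om y) /\
    (forall x y, Kc x -> inRd d y -> dist d x y < r0 ->
       exists zr, In zr zs /\ cube d (fst zr) (snd zr) x /\ cube d (fst zr) (snd zr) y).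
Proof.
  intros [HKin HKcov] HKO.
  assert (Hrad : forall z : {z | Kc z}, exists rho, 0 < rho /\
            forall y, cube d (proj1_sig z) rho y -> Om y).
  { intros [z Hz]; destruct (cube_in_open d Om z 1 HOm (HKO z Hz)) as [r [Hr [_ [HQ _]]]];
      [lra | exists r; auto]. }
  destruct (functional_choice _ Hrad) as [rf Hrf].
  set (half_cube := fun (z : {z | Kc z}) y =>
         inRd d y /\ forall j, (j < d)%nat -> Rabs (y j - proj1_sig z j) < rf z / 2).
  destruct (HKcov {z | Kc z} half_cube) as [l Hl].
  - intros z y Hyd [_ Hyz].
    destruct (index_common_lower_bound d (fun j t => forall y', inRd d y' -> dist d y y' < t ->
                Rabs (y' j - proj1_sig z j) < rf z / 2)) as [s [Hs Hsb]].
    + intros j Hj; exists (rf z / 2 - Rabs (y j - proj1_sig z j)); split; [specialize (Hyz j Hj); lra |].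
      intros t Ht Hts y' Hy' Hdy'; pose proof (coord_le_dist d y y' j Hj).
      replace (y' j - proj1_sig z j) with ((y' j - y j) + (y j - proj1_sig z j)) by ring.
      eapply Rle_lt_trans; [apply Rabs_triang |]; rewrite Rabs_minus_sym; lra.
    + exists s; split; [exact Hs |]; intros y' Hy' Hdy'; split; [exact Hy' |].
      intros j Hj; apply (Hsb j Hj s Hs (Rle_refl s)); auto.
  - intros x Hx; exists (exist _ x Hx); split; [apply HKin, Hx |]; intros j Hj.
    destruct (Hrf (exist _ x Hx)) as [Hpos _]; simpl; rewrite Rminus_diag, Rabs_R0.
    change (0 < rf (exist (fun z => Kc z) x Hx) / 2); lra.
  - destruct (list_common_lower_bound l (fun z t => t <= rf z / 2)) as [r0 [Hr0 Hr0b]].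
    { intros z _; exists (rf z / 2); destruct (Hrf z); split; [lra | auto]. }
    exists (map (fun z => (proj1_sig z, rf z)) l), r0; split; [exact Hr0 | split].
    + intros zr Hzr; apply in_map_iff in Hzr; destruct Hzr as [z [<- _]]; apply Hrf.
    + intros x y Hx Hyd Hxy; destruct (Hl x Hx) as [z [Hz [_ Hxz]]].
      specialize (Hr0b z Hz r0 Hr0 (Rle_refl r0)).
      exists (proj1_sig z, rf z); split; [apply in_map_iff; exists z; auto |]; simpl.
      split; split; [apply HKin, Hx | | exact Hyd |]; intros j Hj; specialize (Hxz j Hj).
      * lra.
      * pose proof (coord_le_dist d x y j Hj).
        replace (y j - proj1_sig z j) with ((x j - proj1_sig z j) - (x j - y j)) by ring.
        eapply Rle_trans; [apply Rabs_triang | rewrite Rabs_Ropp; lra].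
Qed.

(* Near the diagonal use the mean value theorem in a cube of the cover; far
   from it, the bound 2 sup |g| <= (2 sup |g| / r0) |x - y|. *)
Lemma lipschitz_on_compact g Kc : cont_on K d Om g ->
  (forall j, (j < d)%nat -> exists psi, has_partial K Om j g psi /\ cont_on K d Om psi) ->
  compact_Rd d Kc -> (forall x, Kc x -> Om x) ->
  exists M, forall x y, Kc x -> Kc y -> 0 < dist d x y ->
    Kabs (vsub K (g x) (g y)) <= M * dist d x y.
Proof.
  intros Hgc Hpar HKc HKO.
  destruct (compact_cube_cover Kc HKc HKO) as (zs & r0 & Hr0 & HzsOm & Hcover).
  destruct (list_common_upper_bound zs (fun zr M => forall y w,
      cube d (fst zr) (snd zr) y -> cube d (fst zr) (snd zr) w ->
      Kabs (vsub K (g w) (g y)) <= M * dist d y w)) as [Cm [HCm0 HCm]].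
  { intros [z rho] Hz; simpl; specialize (HzsOm _ Hz); simpl in HzsOm.
    destruct (index_common_upper_bound d (fun j M => exists psi, has_partial K Om j g psi /\
        forall y, cube d z rho y -> Kabs (psi y) <= M)) as [C [HC0 HC]].
    { intros j Hj; destruct (Hpar j Hj) as [psi [Hp Hc]].
      destruct (cont_on_bounded d Om HOm psi (cube d z rho) Hc (cube_compact d z rho) HzsOm)
        as [Mj [_ HMj]].
      exists Mj; intros M' HM'; exists psi; split; [exact Hp |].
      intros y Hy; eapply Rle_trans; [apply HMj, Hy | exact HM']. }
    exists (2 * C * INR d); intros M' HM' y w Hy Hw.
    eapply Rle_trans; [apply (cube_lipschitz d Om HOm g z rho C HzsOm HC0); auto |].
    - intros j Hj; apply HC; [exact Hj | lra].
    - apply Rmult_le_compat_r; [apply dist_nonneg | exact HM']. }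
  destruct (cont_on_bounded d Om HOm g Kc Hgc HKc HKO) as [M0 [HM00 HM0]].
  assert (HM2 : 0 <= 2 * M0 / r0) by (apply Rmult_le_pos; [lra | left; apply Rinv_0_lt_compat; auto]).
  exists (Cm + 2 * M0 / r0); intros x y Hx Hy Hxy.
  destruct (Rlt_or_le (dist d x y) r0) as [Hnear | Hfar].
  - destruct (Hcover x y Hx (proj1 HKc y Hy) Hnear) as [zr (Hzr & Hxc & Hyc)].
    pose proof (HCm zr Hzr Cm (Rle_refl Cm) y x Hyc Hxc); rewrite dist_sym in H; nra.
  - eapply Rle_trans; [apply (sn_sub_le K (Kspace_lcHs k) tt) |].
    pose proof (HM0 x Hx); pose proof (HM0 y Hy); simpl sn.
    assert (2 * M0 <= 2 * M0 / r0 * dist d x y).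
    { replace (2 * M0) with (2 * M0 / r0 * r0) at 1 by (field; lra).
      apply Rmult_le_compat_l; auto. }
    pose proof (dist_nonneg d x y); nra.
Qed.

Lemma Ckg_loc_1_of_Ck_succ n phi : Ck K d Om (S n) phi -> Ckg_loc K d Om n 1 phi.
Proof.
  intro Hc; split; [intros l Hl; apply Hc; lia |].
  intros Kc HKc HKO a; split; intros l g Hl Hd Hg;
    destruct (Hc l) as [g' [Hg' Hc']]; try lia; auto;
    assert (Hgg' : forall x, Om x -> g x = g' x)
      by (intros; apply (is_deriv_unique K (Kspace_lcHs k) d Om HOm l phi); auto).
  - destruct (cont_on_bounded d Om HOm g' Kc Hc' HKc HKO) as [M [_ HM]].
    exists M; intros x Hx; rewrite Hgg' by (apply HKO, Hx); apply HM, Hx.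
  - destruct (lipschitz_on_compact g' Kc Hc') as [M HM]; auto.
    + intros j Hj; destruct (Hc (l ++ j :: nil)) as [gj [Hgj Hcj]];
        [rewrite length_app; simpl; lia | apply Forall_app; split; auto |].
      destruct (is_deriv_snoc_inv K Om l j phi gj Hgj) as [h [Hh Hhp]].
      exists gj; split; [| exact Hcj].
      apply (has_partial_ext K Om j h g' gj gj); auto.
      intros x Hx; apply (is_deriv_unique K (Kspace_lcHs k) d Om HOm l phi); auto.
    + exists M; intros x y Hx Hy Hxy; rewrite Rpower_1, !Hgg' by auto; apply HM; auto.
Qed.

End ScalarLipschitz.

Theorem mainTheorem11 :
  forall (k : Kind) (E : LCS k),
    lcHs E -> locally_complete E ->
  forall G : (E -> Kt k) -> Prop,
    dual_subspace E G -> determines_boundedness E G ->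
  forall (d : nat) (Om : (nat -> R) -> Prop), open_domain d Om ->
  forall (n : nat) (gam : R), 0 < gam <= 1 ->
    (forall f : (nat -> R) -> E,
       (forall e, G e -> Ckg_loc (Kspace k) d Om n gam (fun x => e (f x))) ->
       Ckg_loc E d Om n gam f) /\
    (forall f : (nat -> R) -> E,
       (forall e, G e -> Ck (Kspace k) d Om (S n) (fun x => e (f x))) ->
       Ckg_loc E d Om n 1 f).
Proof.
  intros k E HE HLC G HG HGb d Om HOm n gam Hgam; split.
  - intros f Hweak; apply (Ckg_loc_of_weak E HE HLC G HG HGb d Om HOm gam Hgam n f Hweak).
  - intros f Hweak; apply (Ckg_loc_of_weak E HE HLC G HG HGb d Om HOm 1 ltac:(lra) n f).
    intros e He; apply (Ckg_loc_1_of_Ck_succ d Om HOm), Hweak, He.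
Qed.
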